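(* Let $\gamma=(x,y)$ be a smooth nondegenerate curve in the equi-affine plane, parametrised by equi-affine arc-length $s$, with equi-affine curvature $\kappa$. Then $\gamma$ is a critical point of the total equi-affine curvature $\int\kappa\,\mathrm{d}s$ (with respect to compactly supported variations) if and only if there exist constants $A,B\in\mathbb{R}$ with $\kappa=A\,x'+B\,y'$; i.e., the centro-affine curvature of the tangent image $T=\gamma'$ is a linear function of its position vector.
   Context: The equi-affine plane is $\mathbb{R}^2$ with the area form $|u,v|=\det(u,v)$. A curve $\gamma$ is parametrised by equi-affine arc-length $s$ if $|\gamma',\gamma''|=1$ everywhere; primes denote derivatives with respect to $s$. The equi-affine tangent is $T=\gamma'$, the Blaschke normal is $N=\gamma''$, and the equi-affine curvature $\kappa$ is defined by $\gamma'''=-\kappa\,\gamma'$. The centro-affine curvature of the curve $s\mapsto T(s)$ is $\kappa$ itself in the sense that $T''=-\kappa T$. A curve is a critical point of a functional if the first variation of the functional vanishes for every smooth compactly supported variation (for closed curves, every smooth variation), the functional being computed for each varied curve with its own equi-affine arc-length and curvature. *)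

From Stdlib Require Import Reals.
From Coquelicot Require Import Coquelicot.
Open Scope R_scope.

Definition inI (lo hi : Rbar) (t : R) : Prop :=
  Rbar_lt lo (Finite t) /\ Rbar_lt (Finite t) hi.

Definition det2 (u1 u2 v1 v2 : R) : R := u1 * v2 - u2 * v1.

Definition smooth_on (lo hi : Rbar) (f : R -> R) : Prop :=
  forall (n : nat) (t : R), inI lo hi t -> ex_derive_n f n t.

(* C^k on the strip R x I of a function f u t (u = variation parameter,
   t = curve parameter): all mixed partial derivatives of order <= k
   exist and are jointly continuous. *)
Fixpoint C2k (k : nat) (lo hi : Rbar) (f : R -> R -> R) : Prop :=
  match k with
  | O => forall u t, inI lo hi t ->
           continuous (fun p : R * R => f (fst p) (snd p)) (u, t)
  | S k' =>
      (forall u t, inI lo hi t ->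
         ex_derive (fun s => f u s) t /\ ex_derive (fun v => f v t) u)
      /\ C2k k' lo hi (fun u t => Derive (fun s => f u s) t)
      /\ C2k k' lo hi (fun u t => Derive (fun v => f v t) u)
      /\ C2k k' lo hi f
  end.

Definition smooth2_on (lo hi : Rbar) (f : R -> R -> R) : Prop :=
  forall k, C2k k lo hi f.

(* Equi-affine quantities of a plane curve c = (x, y) in an arbitrary
   (nondegenerate, |c',c''| > 0) parametrisation t; d/ds = (1/phi) d/dt. *)
Definition ea_det (x y : R -> R) (t : R) : R :=
  det2 (Derive x t) (Derive y t) (Derive_n x 2 t) (Derive_n y 2 t).

(* ds/dt = |c',c''|^(1/3) *)
Definition ea_phi (x y : R -> R) (t : R) : R := Rpower (ea_det x y t) (1/3).

Definition ea_Tx (x y : R -> R) (t : R) : R := Derive x t / ea_phi x y t.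
Definition ea_Ty (x y : R -> R) (t : R) : R := Derive y t / ea_phi x y t.

Definition ea_Nx (x y : R -> R) (t : R) : R :=
  Derive (ea_Tx x y) t / ea_phi x y t.
Definition ea_Ny (x y : R -> R) (t : R) : R :=
  Derive (ea_Ty x y) t / ea_phi x y t.

(* equi-affine curvature: dN/ds = -kappa T with |T,N| = 1,
   i.e. kappa = |N, dN/ds|. *)
Definition ea_curv (x y : R -> R) (t : R) : R :=
  det2 (ea_Nx x y t) (ea_Ny x y t)
       (Derive (ea_Nx x y) t / ea_phi x y t)
       (Derive (ea_Ny x y) t / ea_phi x y t).

Definition total_ea_curv (x y : R -> R) (a b : R) : R :=
  RInt (fun t => ea_curv x y t * ea_phi x y t) a b.

Definition ea_critical (lo hi : Rbar) (x y : R -> R) : Prop :=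
  forall (X Y : R -> R -> R) (a b : R),
    smooth2_on lo hi X -> smooth2_on lo hi Y ->
    (forall t, inI lo hi t -> X 0 t = x t /\ Y 0 t = y t) ->
    inI lo hi a -> inI lo hi b -> a <= b ->
    (forall u t, inI lo hi t -> (t < a \/ b < t) -> X u t = x t /\ Y u t = y t) ->
    is_derive (fun u => total_ea_curv (X u) (Y u) a b) 0 0.

From Stdlib Require Import Reals Lra Lia Psatz ClassicalEpsilon Classical List.
From Coquelicot Require Import Coquelicot.
Open Scope R_scope.

(* Along a variation of [gamma] supported in [a, b], differentiating under the integral sign
   and integrating by parts gives the first variation of [int kappa ds] as
   [int (2/3) (kappa'' + kappa^2) |gamma', V| ds]; the boundary term vanishes at the ends of
   the support. Testing against smooth bumps in both coordinate directions turns criticality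
   into the Euler-Lagrange equation [kappa'' + kappa^2 = 0]. Since [gamma''' = -kappa gamma'],
   a curvature [kappa = A x' + B y'] gives [kappa'' = A x''' + B y''' = -kappa^2]. Conversely,
   solving [kappa = A x' + B y'], [kappa' = A x'' + B y''] for [A] and [B] by Cramer's rule
   produces functions whose derivatives are multiples of [kappa'' + kappa^2], hence constants. *)

Lemma ball_Rabs (c e s : R) : ball c e s <-> Rabs (s - c) < e.
Proof. unfold ball; simpl; unfold AbsRing_ball, abs, minus, plus, opp; simpl; tauto. Qed.

Lemma inI_locally lo hi t : inI lo hi t -> locally t (inI lo hi).
Proof. intros [H1 H2]. apply (locally_interval _ t lo hi H1 H2). intros s; split; assumption. Qed.

Lemma inI_open lo hi t : inI lo hi t ->
  exists e : posreal, forall s, Rabs (s - t) < e -> inI lo hi s.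
Proof.
  intros Ht. destruct (inI_locally _ _ _ Ht) as [e He].
  exists e. intros s Hs. apply He, ball_Rabs, Hs.
Qed.

Lemma inI_locally_forall lo hi (P : R -> Prop) t :
  inI lo hi t -> (forall s, inI lo hi s -> P s) -> locally t P.
Proof. intros Ht HP. eapply filter_imp; [exact HP | apply inI_locally, Ht]. Qed.

Lemma inI_between lo hi a b t : inI lo hi a -> inI lo hi b -> a <= t <= b -> inI lo hi t.
Proof.
  intros [A1 A2] [B1 B2] [H1 H2]. split.
  - apply Rbar_lt_le_trans with (Finite a); [exact A1 | exact H1].
  - apply Rbar_le_lt_trans with (Finite b); [exact H2 | exact B2].
Qed.

Lemma is_derive_continuous (f : R -> R) t l : is_derive f t l -> continuous f t.
Proof. intros H. apply (@ex_derive_continuous R_AbsRing R_NormedModule). eexists; exact H. Qed.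

(* Coquelicot's [continuous_plus], ... are stated over an arbitrary normed module and do not
   unify with goals about real functions; these are their real instances. *)
Section RContinuity.
Variables (f g : R -> R) (t : R).
Hypotheses (Hf : continuous f t) (Hg : continuous g t).

Lemma Rcontinuous_plus : continuous (fun s => f s + g s) t.
Proof. exact (continuous_plus f g t Hf Hg). Qed.
Lemma Rcontinuous_opp : continuous (fun s => - f s) t.
Proof. exact (continuous_opp f t Hf). Qed.
Lemma Rcontinuous_mult : continuous (fun s => f s * g s) t.
Proof. exact (continuous_mult f g t Hf Hg). Qed.
Lemma Rcontinuous_minus : continuous (fun s => f s - g s) t.
Proof. exact (continuous_plus f (fun s => - g s) t Hf (continuous_opp g t Hg)). Qed.
Lemma Rcontinuous_pow n : continuous (fun s => f s ^ n) t.
Proof.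
  induction n; [exact (continuous_const 1 t) |].
  exact (continuous_mult f (fun s => f s ^ n) t Hf IHn).
Qed.

End RContinuity.

Ltac Rcontinuity :=
  repeat match goal with
  | |- continuous (fun s => _ + _) _ => apply Rcontinuous_plus
  | |- continuous (fun s => _ - _) _ => apply Rcontinuous_minus
  | |- continuous (fun s => - _) _ => apply Rcontinuous_opp
  | |- continuous (fun s => _ * _) _ => apply Rcontinuous_mult
  | |- continuous (fun s => _ ^ _) _ => apply Rcontinuous_pow
  | |- continuous (fun _ => ?c) _ => exact (continuous_const c _)
  | |- _ => assumption
  end.

Definition partial_t (f : R -> R -> R) : R -> R -> R :=
  fun u t => Derive (fun s => f u s) t.
Definition partial_u (f : R -> R -> R) : R -> R -> R :=
  fun u t => Derive (fun v => f v t) u.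
Definition partial_t_n (f : R -> R -> R) (j : nat) : R -> R -> R :=
  fun u t => Derive_n (f u) j t.

Section Smooth2.
Variables (lo hi : Rbar) (f : R -> R -> R).
Hypothesis Hf : smooth2_on lo hi f.

Lemma smooth2_partial_t : smooth2_on lo hi (partial_t f).
Proof. intros k. exact (proj1 (proj2 (Hf (S k)))). Qed.

Lemma smooth2_partial_u : smooth2_on lo hi (partial_u f).
Proof. intros k. exact (proj1 (proj2 (proj2 (Hf (S k))))). Qed.

Lemma smooth2_continuity u t : inI lo hi t -> continuity_2d_pt f u t.
Proof. intros Ht. apply continuity_2d_pt_filterlim. exact (Hf O u t Ht). Qed.

Lemma smooth2_ex_derive u t : inI lo hi t ->
  ex_derive (fun s => f u s) t /\ ex_derive (fun v => f v t) u.
Proof. intros Ht. exact (proj1 (Hf 1%nat) u t Ht). Qed.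

End Smooth2.

Lemma smooth2_partial_t_n lo hi f j :
  smooth2_on lo hi f -> smooth2_on lo hi (partial_t_n f j).
Proof. intros H. induction j; [exact H | exact (smooth2_partial_t _ _ _ IHj)]. Qed.

Lemma smooth2_Schwarz lo hi f u t : smooth2_on lo hi f -> inI lo hi t ->
  Derive (fun z => Derive (fun s => f z s) t) u = Derive (fun s => Derive (fun z => f z s) u) t.
Proof.
  intros H Ht. destruct (inI_open _ _ _ Ht) as [e He].
  pose proof (smooth2_partial_t _ _ _ H) as Ht'. pose proof (smooth2_partial_u _ _ _ H) as Hu'.
  apply Schwarz.
  - exists e. intros u' v _ Hv. specialize (He v Hv).
    destruct (smooth2_ex_derive _ _ f H u' v He) as [A B].
    destruct (smooth2_ex_derive _ _ _ Ht' u' v He) as [_ C].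
    destruct (smooth2_ex_derive _ _ _ Hu' u' v He) as [D _].
    unfold partial_t, partial_u in *. tauto.
  - exact (smooth2_continuity _ _ _ (smooth2_partial_u _ _ _ Ht') u t Ht).
  - exact (smooth2_continuity _ _ _ (smooth2_partial_t _ _ _ Hu') u t Ht).
Qed.

Ltac rewrite_derives :=
  repeat match goal with
  | H : is_derive ?f ?s ?l |- context [Derive ?g ?s] =>
      let E := fresh in
      assert (E : Derive g s = l) by (apply is_derive_unique; exact H);
      rewrite E; clear E
  end.

Ltac auto_derive_from_hyps :=
  auto_derive; [repeat split; try exact I; eexists; eassumption | rewrite_derives].

Ltac eval_Derive :=
  match goal with
  | |- context [Derive ?f ?t] =>
      let H := fresh in
      eassert (H : is_derive f t _) by (auto_derive_from_hyps; reflexivity);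
      rewrite (is_derive_unique _ _ _ H); clear H
  end.

(** * Curvature in an arbitrary parametrisation *)

Definition inv_cbrt (y : R) : R := / Rpower y (1/3).

Lemma inv_cbrt_exp y : 0 < y -> inv_cbrt y = exp (-(1/3) * ln y).
Proof. intros H. unfold inv_cbrt, Rpower. rewrite <- exp_Ropp. f_equal. ring. Qed.

Lemma inv_cbrt_1 : inv_cbrt 1 = 1.
Proof. rewrite inv_cbrt_exp by lra. rewrite ln_1, Rmult_0_r. apply exp_0. Qed.

Lemma inv_cbrt_is_derive y : 0 < y -> is_derive inv_cbrt y (-(1/3) * inv_cbrt y ^ 4).
Proof.
  intros H.
  apply is_derive_ext_loc with (fun y => exp (-(1/3) * ln y)).
  - apply (locally_interval _ y 0 p_infty H I). intros z Hz _. symmetry. apply inv_cbrt_exp, Hz.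
  - auto_derive; [lra |].
    rewrite inv_cbrt_exp by exact H. set (e := exp (-(1/3) * ln y)).
    assert (E : e * (e * e) = / y).
    { rewrite <- (exp_ln y H). unfold e. rewrite <- !exp_plus, <- exp_Ropp.
      f_equal. field. }
    rewrite <- E. ring.
Qed.

Lemma inv_cbrt_comp_is_derive (D : R -> R) s d : 0 < D s -> is_derive D s d ->
  is_derive (fun r => inv_cbrt (D r)) s (-(1/3) * inv_cbrt (D s) ^ 4 * d).
Proof.
  intros Hp HD. pose proof (is_derive_comp inv_cbrt D s _ _ (inv_cbrt_is_derive _ Hp) HD) as K.
  replace (-(1/3) * inv_cbrt (D s) ^ 4 * d) with (scal d (-(1/3) * inv_cbrt (D s) ^ 4))
    by (unfold scal; simpl; unfold mult; simpl; ring).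
  exact K.
Qed.

Lemma inv_cbrt_continuous y : 0 < y -> continuous inv_cbrt y.
Proof. intros H. eapply is_derive_continuous, inv_cbrt_is_derive, H. Qed.

(* [curv_poly] is [|N, dN/dt|] (the density of [kappa ds] in the parameter [t]) as a
   polynomial in [x', ..., x'''', y', ..., y''''] and [q = |c', c''|^(-1/3)]; here
   [det_d1], [det_d2] are the first two derivatives of [|c', c''|], [q_rate] stands for
   [-q'/q^2] and [q_rate_d1] for its derivative. *)
Definition det_d1 x1 x3 y1 y3 := x1 * y3 - y1 * x3.
Definition det_d2 x1 x2 x3 x4 y1 y2 y3 y4 := x1 * y4 + x2 * y3 - y1 * x4 - y2 * x3.
Definition q_rate d1 q := d1 * q ^ 2 / 3.
Definition q_rate_d1 d1 d2 q := d2 * q ^ 2 / 3 - 2 * d1 ^ 2 * q ^ 5 / 9.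
Definition normal_coord x1 x2 p1 q := x2 * q ^ 2 - x1 * p1 * q ^ 3.
Definition normal_coord_d1 x1 x2 x3 p1 p2 q :=
  x3 * q ^ 2 - 3 * x2 * p1 * q ^ 3 - x1 * p2 * q ^ 3 + 3 * x1 * p1 ^ 2 * q ^ 4.
Definition curv_poly x1 x2 x3 x4 y1 y2 y3 y4 q :=
  let d1 := det_d1 x1 x3 y1 y3 in
  let d2 := det_d2 x1 x2 x3 x4 y1 y2 y3 y4 in
  normal_coord x1 x2 (q_rate d1 q) q * normal_coord_d1 y1 y2 y3 (q_rate d1 q) (q_rate_d1 d1 d2 q) q
  - normal_coord y1 y2 (q_rate d1 q) q * normal_coord_d1 x1 x2 x3 (q_rate d1 q) (q_rate_d1 d1 d2 q) q.

Lemma normal_det_eq_curv_poly (x1 x2 x3 y1 y2 y3 q : R -> R) (x4 y4 t : R) :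
  locally t (fun s => is_derive x1 s (x2 s) /\ is_derive y1 s (y2 s) /\
     is_derive x2 s (x3 s) /\ is_derive y2 s (y3 s) /\
     is_derive q s (-(1/3) * q s ^ 4 * det_d1 (x1 s) (x3 s) (y1 s) (y3 s))) ->
  is_derive x3 t x4 -> is_derive y3 t y4 ->
  (Derive (fun r => x1 r * q r) t * q t) * Derive (fun s => Derive (fun r => y1 r * q r) s * q s) t
  - (Derive (fun r => y1 r * q r) t * q t) * Derive (fun s => Derive (fun r => x1 r * q r) s * q s) t
  = curv_poly (x1 t) (x2 t) (x3 t) x4 (y1 t) (y2 t) (y3 t) y4 (q t).
Proof.
  intros Hl Hx4 Hy4.
  assert (HN : forall c1 c2 : R -> R,
    locally t (fun s => is_derive c1 s (c2 s)) ->
    locally t (fun s => Derive (fun r => c1 r * q r) s * q s =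
      (c2 s * q s + c1 s * (-(1/3) * q s ^ 4 * det_d1 (x1 s) (x3 s) (y1 s) (y3 s))) * q s)).
  { intros c1 c2 Hc. generalize (filter_and _ _ Hl Hc).
    apply filter_imp. intros s [(_ & _ & _ & _ & Hq) H1].
    f_equal. apply is_derive_unique. auto_derive_from_hyps. ring. }
  pose proof (HN x1 x2 (filter_imp _ _ (fun s H => proj1 H) Hl)) as Nx.
  pose proof (HN y1 y2 (filter_imp _ _ (fun s H => proj1 (proj2 H)) Hl)) as Ny.
  erewrite (Derive_ext_loc (fun s => Derive (fun r => x1 r * q r) s * q s)) by exact Nx.
  erewrite (Derive_ext_loc (fun s => Derive (fun r => y1 r * q r) s * q s)) by exact Ny.
  rewrite (locally_singleton _ _ Nx), (locally_singleton _ _ Ny).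
  destruct (locally_singleton _ _ Hl) as (A & B & C & D & E).
  unfold det_d1 in *. do 2 eval_Derive. rewrite_derives.
  unfold curv_poly, normal_coord, normal_coord_d1, q_rate, q_rate_d1, det_d1, det_d2. field.
Qed.

Lemma ea_det_is_derive cx cy s :
  ex_derive (Derive_n cx 1) s -> ex_derive (Derive_n cy 1) s ->
  ex_derive (Derive_n cx 2) s -> ex_derive (Derive_n cy 2) s ->
  is_derive (ea_det cx cy) s
    (det_d1 (Derive_n cx 1 s) (Derive_n cx 3 s) (Derive_n cy 1 s) (Derive_n cy 3 s)).
Proof.
  intros A1 B1 A2 B2.
  apply Derive_correct in A1, B1, A2, B2. unfold ea_det, det2, det_d1.
  auto_derive_from_hyps.
  change (Derive_n cx 3 s) with (Derive (Derive_n cx 2) s).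
  change (Derive_n cy 3 s) with (Derive (Derive_n cy 2) s).
  change (Derive_n cx 1 s) with (Derive cx s).
  change (Derive_n cy 1 s) with (Derive cy s).
  ring.
Qed.

Lemma ea_curv_phi_eq_curv_poly cx cy t :
  locally t (fun s => 0 < ea_det cx cy s /\
    forall n, ex_derive (Derive_n cx n) s /\ ex_derive (Derive_n cy n) s) ->
  ea_curv cx cy t * ea_phi cx cy t =
  curv_poly (Derive_n cx 1 t) (Derive_n cx 2 t) (Derive_n cx 3 t) (Derive_n cx 4 t)
            (Derive_n cy 1 t) (Derive_n cy 2 t) (Derive_n cy 3 t) (Derive_n cy 4 t)
            (inv_cbrt (ea_det cx cy t)).
Proof.
  intros Hl. destruct (locally_singleton _ _ Hl) as [_ Hd].
  assert (Hphi : ea_phi cx cy t <> 0) by (apply Rgt_not_eq, exp_pos).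
  transitivity (ea_Nx cx cy t * Derive (ea_Ny cx cy) t - ea_Ny cx cy t * Derive (ea_Nx cx cy) t).
  { unfold ea_curv, det2. field. exact Hphi. }
  apply (normal_det_eq_curv_poly (Derive_n cx 1) (Derive_n cx 2) (Derive_n cx 3)
     (Derive_n cy 1) (Derive_n cy 2) (Derive_n cy 3) (fun s => inv_cbrt (ea_det cx cy s))).
  - eapply filter_imp; [| exact Hl]. intros s [Hs Hn].
    destruct (Hn 1%nat) as [A1 B1], (Hn 2%nat) as [A2 B2].
    split; [|split; [|split; [|split]]]; try (apply Derive_correct; assumption).
    apply inv_cbrt_comp_is_derive; [exact Hs | apply ea_det_is_derive; assumption].
  - apply Derive_correct, (Hd 3%nat).
  - apply Derive_correct, (Hd 3%nat).
Qed.

(** * Differentiation under the integral sign *)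

Definition open2 (Om : R -> R -> Prop) : Prop :=
  forall u t, Om u t -> locally_2d Om u t.

(* Jointly continuous, with a jointly continuous partial derivative in [u], on [Om]:
   enough to differentiate [u |-> RInt (f u) a b] under the integral sign. *)
Definition C1u (Om : R -> R -> Prop) (f : R -> R -> R) : Prop :=
  forall u t, Om u t ->
    continuity_2d_pt f u t /\ ex_derive (fun z => f z t) u /\
    continuity_2d_pt (partial_u f) u t.

Lemma continuity_2d_pt_pow g u t n :
  continuity_2d_pt g u t -> continuity_2d_pt (fun u t => g u t ^ n) u t.
Proof.
  intros H. induction n.
  - apply (continuity_2d_pt_const u t 1).
  - apply (continuity_2d_pt_mult g (fun u t => g u t ^ n)); auto.
Qed.

Section C1u_closure.
Variable Om : R -> R -> Prop.
Hypothesis HOm : open2 Om.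

Lemma open2_locally_2d (P : R -> R -> Prop) u t :
  Om u t -> (forall u' t', Om u' t' -> P u' t') -> locally_2d P u t.
Proof. intros H HP. destruct (HOm u t H) as [d Hd]. exists d. auto. Qed.

Lemma C1u_const c : C1u Om (fun _ _ => c).
Proof.
  intros u t H. split; [apply continuity_2d_pt_const | split; [apply ex_derive_const |]].
  apply continuity_2d_pt_ext with (fun _ _ => 0); [| apply continuity_2d_pt_const].
  intros; symmetry; apply (Derive_const c).
Qed.

Lemma C1u_plus f g : C1u Om f -> C1u Om g -> C1u Om (fun u t => f u t + g u t).
Proof.
  intros Hf Hg u t H. destruct (Hf u t H) as (A1 & B1 & C1), (Hg u t H) as (A2 & B2 & C2).
  split; [apply continuity_2d_pt_plus; auto | split; [auto_derive; auto |]].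
  apply continuity_2d_pt_ext_loc with (fun u t => partial_u f u t + partial_u g u t).
  - apply open2_locally_2d; auto. intros u' t' H'.
    symmetry. apply (Derive_plus (fun z => f z t') (fun z => g z t'));
      [apply (Hf u' t' H') | apply (Hg u' t' H')].
  - apply continuity_2d_pt_plus; auto.
Qed.

Lemma C1u_opp f : C1u Om f -> C1u Om (fun u t => - f u t).
Proof.
  intros Hf u t H. destruct (Hf u t H) as (A1 & B1 & C1).
  split; [apply continuity_2d_pt_opp; auto | split; [auto_derive; auto |]].
  apply continuity_2d_pt_ext with (fun u t => - partial_u f u t).
  - intros u' t'. symmetry. apply (Derive_opp (fun z => f z t')).
  - apply continuity_2d_pt_opp; auto.
Qed.

Lemma C1u_minus f g : C1u Om f -> C1u Om g -> C1u Om (fun u t => f u t - g u t).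
Proof. intros Hf Hg. apply (C1u_plus f (fun u t => - g u t)); [| apply C1u_opp]; auto. Qed.

Lemma C1u_mult f g : C1u Om f -> C1u Om g -> C1u Om (fun u t => f u t * g u t).
Proof.
  intros Hf Hg u t H. destruct (Hf u t H) as (A1 & B1 & C1), (Hg u t H) as (A2 & B2 & C2).
  split; [apply continuity_2d_pt_mult; auto | split; [auto_derive; auto |]].
  apply continuity_2d_pt_ext_loc with
    (fun u t => partial_u f u t * g u t + f u t * partial_u g u t).
  - apply open2_locally_2d; auto. intros u' t' H'.
    symmetry. apply (Derive_mult (fun z => f z t') (fun z => g z t'));
      [apply (Hf u' t' H') | apply (Hg u' t' H')].
  - apply continuity_2d_pt_plus; apply continuity_2d_pt_mult; auto.
Qed.

Lemma C1u_pow f n : C1u Om f -> C1u Om (fun u t => f u t ^ n).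
Proof.
  intros Hf. induction n; [exact (C1u_const 1) |].
  apply (C1u_mult f (fun u t => f u t ^ n)); auto.
Qed.

Lemma C1u_inv_cbrt f : C1u Om f -> (forall u t, Om u t -> 0 < f u t) ->
  C1u Om (fun u t => inv_cbrt (f u t)).
Proof.
  intros Hf Hp.
  assert (Hc : forall u t, Om u t -> continuity_2d_pt (fun u t => inv_cbrt (f u t)) u t).
  { intros u t H. apply continuity_1d_2d_pt_comp; [| apply (Hf u t H)].
    apply continuity_pt_filterlim, inv_cbrt_continuous, Hp, H. }
  intros u t H. destruct (Hf u t H) as (A1 & [l Hl] & C1).
  split; [apply Hc, H | split].
  - eexists. apply (inv_cbrt_comp_is_derive (fun z => f z t)); [apply Hp, H | exact Hl].
  - apply continuity_2d_pt_ext_loc with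
      (fun u t => -(1/3) * inv_cbrt (f u t) ^ 4 * partial_u f u t).
    + apply open2_locally_2d; auto. intros u' t' H'.
      symmetry. apply is_derive_unique, (inv_cbrt_comp_is_derive (fun z => f z t'));
        [apply Hp, H' | apply Derive_correct, (Hf u' t' H')].
    + apply continuity_2d_pt_mult; [apply continuity_2d_pt_mult |]; auto.
      * apply continuity_2d_pt_const.
      * apply continuity_2d_pt_pow, Hc, H.
Qed.

End C1u_closure.

(* The boundary term of the first variation: for a variation field [V = (v0, w0)] (with
   [t]-derivatives [vj], [wj]) of a curve with [|c', c''| = 1], its [t]-derivative is the
   variation of [kappa ds] minus [(2/3) (kappa'' + kappa^2) |c', V|], obtained by
   integrating by parts. *)
Definition flux (x1 x2 x3 x4 y1 y2 y3 y4 v0 v1 v2 v3 w0 w1 w2 w3 : R) : R :=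
  (x2 * (w2 - 2/3*(v1*y2 + x1*w2 - w1*x2 - y1*v2)*y2 - 1/3*(v1*y3 + x1*w3 - w1*x3 - y1*v3)*y1)
   - y2 * (v2 - 2/3*(v1*y2 + x1*w2 - w1*x2 - y1*v2)*x2 - 1/3*(v1*y3 + x1*w3 - w1*x3 - y1*v3)*x1))
  + 2/3*((x2*y3 - y2*x3)*(x1*w1 - y1*v1) - (x2*y4 - y2*x4)*(x1*w0 - y1*v0)
         + (x2*y3 - y2*x3)*(x2*w0 - y2*v0)).

Lemma curv_poly_first_variation (x1 x2 y1 y2 k0 k1 k2 v0 v1 v2 v3 v4 w0 w1 w2 w3 w4 : R) :
  x1 * y2 - y1 * x2 = 1 ->
  let x3 := -k0*x1 in let y3 := -k0*y1 in
  let x4 := -k1*x1 - k0*x2 in let y4 := -k1*y1 - k0*y2 in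
  let x5 := -k2*x1 - 2*k1*x2 + k0^2*x1 in let y5 := -k2*y1 - 2*k1*y2 + k0^2*y1 in
  Derive (fun e => curv_poly (x1 + e*v1) (x2 + e*v2) (x3 + e*v3) (x4 + e*v4)
      (y1 + e*w1) (y2 + e*w2) (y3 + e*w3) (y4 + e*w4)
      (1 + e*(-(1/3)*(v1*y2 + x1*w2 - w1*x2 - y1*v2)))) 0
  = Derive (fun e => flux (x1 + e*x2) (x2 + e*x3) (x3 + e*x4) (x4 + e*x5)
      (y1 + e*y2) (y2 + e*y3) (y3 + e*y4) (y4 + e*y5)
      (v0 + e*v1) (v1 + e*v2) (v2 + e*v3) (v3 + e*v4)
      (w0 + e*w1) (w1 + e*w2) (w2 + e*w3) (w3 + e*w4)) 0
    + 2/3 * (k2 + k0^2) * (x1*w0 - y1*v0).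
Proof.
  intros HD x3 y3 x4 y4 x5 y5.
  unfold curv_poly, normal_coord, normal_coord_d1, q_rate, q_rate_d1, det_d1, det_d2, flux.
  do 2 eval_Derive.
  unfold x3, y3, x4, y4, x5, y5.
  (* eliminate [y2] (or [x2]) using the unimodularity constraint *)
  destruct (Req_dec x1 0) as [Hx | Hx].
  - assert (Hy : y1 <> 0) by (intros Hy; rewrite Hx, Hy in HD; lra).
    replace x2 with ((x1 * y2 - 1) / y1) by (field_simplify_eq; [lra | exact Hy]).
    field. exact Hy.
  - replace y2 with ((1 + y1 * x2) / x1) by (field_simplify_eq; [lra | exact Hx]).
    field. exact Hx.
Qed.

Lemma Derive_curv_poly_comp (f1 f2 f3 f4 g1 g2 g3 g4 q : R -> R) z0
    a1 a2 a3 a4 b1 b2 b3 b4 c :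
  is_derive f1 z0 a1 -> is_derive f2 z0 a2 -> is_derive f3 z0 a3 -> is_derive f4 z0 a4 ->
  is_derive g1 z0 b1 -> is_derive g2 z0 b2 -> is_derive g3 z0 b3 -> is_derive g4 z0 b4 ->
  is_derive q z0 c ->
  Derive (fun z => curv_poly (f1 z) (f2 z) (f3 z) (f4 z) (g1 z) (g2 z) (g3 z) (g4 z) (q z)) z0 =
  Derive (fun e => curv_poly (f1 z0 + e*a1) (f2 z0 + e*a2) (f3 z0 + e*a3) (f4 z0 + e*a4)
                   (g1 z0 + e*b1) (g2 z0 + e*b2) (g3 z0 + e*b3) (g4 z0 + e*b4) (q z0 + e*c)) 0.
Proof.
  intros.
  unfold curv_poly, normal_coord, normal_coord_d1, q_rate, q_rate_d1, det_d1, det_d2.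
  do 2 eval_Derive. ring.
Qed.

Lemma is_derive_flux_comp (f1 f2 f3 f4 g1 g2 g3 g4 h0 h1 h2 h3 k0 k1 k2 k3 : R -> R) z0
    a1 a2 a3 a4 b1 b2 b3 b4 c0 c1 c2 c3 d0 d1 d2 d3 :
  is_derive f1 z0 a1 -> is_derive f2 z0 a2 -> is_derive f3 z0 a3 -> is_derive f4 z0 a4 ->
  is_derive g1 z0 b1 -> is_derive g2 z0 b2 -> is_derive g3 z0 b3 -> is_derive g4 z0 b4 ->
  is_derive h0 z0 c0 -> is_derive h1 z0 c1 -> is_derive h2 z0 c2 -> is_derive h3 z0 c3 ->
  is_derive k0 z0 d0 -> is_derive k1 z0 d1 -> is_derive k2 z0 d2 -> is_derive k3 z0 d3 ->
  is_derive (fun z => flux (f1 z) (f2 z) (f3 z) (f4 z) (g1 z) (g2 z) (g3 z) (g4 z)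
                           (h0 z) (h1 z) (h2 z) (h3 z) (k0 z) (k1 z) (k2 z) (k3 z)) z0
  (Derive (fun e => flux (f1 z0 + e*a1) (f2 z0 + e*a2) (f3 z0 + e*a3) (f4 z0 + e*a4)
                         (g1 z0 + e*b1) (g2 z0 + e*b2) (g3 z0 + e*b3) (g4 z0 + e*b4)
                         (h0 z0 + e*c0) (h1 z0 + e*c1) (h2 z0 + e*c2) (h3 z0 + e*c3)
                         (k0 z0 + e*d0) (k1 z0 + e*d1) (k2 z0 + e*d2) (k3 z0 + e*d3)) 0).
Proof.
  intros. unfold flux. eval_Derive. auto_derive_from_hyps. ring.
Qed.

(** * Curves parametrised by equi-affine arc length *)

Lemma smooth_on_is_derive lo hi f n t : smooth_on lo hi f -> inI lo hi t ->
  is_derive (Derive_n f n) t (Derive_n f (S n) t).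
Proof. intros H Ht. apply Derive_correct, (H (S n) t Ht). Qed.

Lemma is_derive_of_locally_const (f : R -> R) t c :
  locally t (fun s => f s = c) -> is_derive f t 0.
Proof.
  intros H. apply is_derive_ext_loc with (fun _ => c).
  - eapply filter_imp; [| exact H]. intros s Hs; symmetry; exact Hs.
  - apply (is_derive_const (V := R_NormedModule)).
Qed.

Lemma unimodular_frame x1 x2 x3 y1 y2 y3 :
  x1 * y2 - y1 * x2 = 1 -> x1 * y3 - y1 * x3 = 0 ->
  x3 = - (x2 * y3 - y2 * x3) * x1 /\ y3 = - (x2 * y3 - y2 * x3) * y1.
Proof.
  intros D E. split.
  - transitivity (x3 * (x1 * y2 - y1 * x2)); [rewrite D; ring |].
    transitivity (- (x2 * y3 - y2 * x3) * x1 + x2 * (x1 * y3 - y1 * x3)); [ring |].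
    rewrite E. ring.
  - transitivity (y3 * (x1 * y2 - y1 * x2)); [rewrite D; ring |].
    transitivity (- (x2 * y3 - y2 * x3) * y1 + y2 * (x1 * y3 - y1 * x3)); [ring |].
    rewrite E. ring.
Qed.

Section UnitSpeed.
Variables (lo hi : Rbar) (x y : R -> R).
Hypotheses (Hsx : smooth_on lo hi x) (Hsy : smooth_on lo hi y)
  (Hdet : forall t, inI lo hi t -> ea_det x y t = 1).

Let dx n t := smooth_on_is_derive lo hi x n t Hsx.
Let dy n t := smooth_on_is_derive lo hi y n t Hsy.

Lemma ea_det_d1_eq_0 t : inI lo hi t ->
  det_d1 (Derive_n x 1 t) (Derive_n x 3 t) (Derive_n y 1 t) (Derive_n y 3 t) = 0.
Proof.
  intros Ht.
  rewrite <- (is_derive_unique (ea_det x y) t _).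
  - apply is_derive_unique, (is_derive_of_locally_const _ _ 1), inI_locally_forall with lo hi; auto.
  - apply ea_det_is_derive;
      [apply (Hsx 2%nat t Ht) | apply (Hsy 2%nat t Ht) | apply (Hsx 3%nat t Ht) | apply (Hsy 3%nat t Ht)].
Qed.

Lemma ea_det_d2_eq_0 t : inI lo hi t ->
  det_d2 (Derive_n x 1 t) (Derive_n x 2 t) (Derive_n x 3 t) (Derive_n x 4 t)
         (Derive_n y 1 t) (Derive_n y 2 t) (Derive_n y 3 t) (Derive_n y 4 t) = 0.
Proof.
  intros Ht.
  assert (H : is_derive (fun r => det_d1 (Derive_n x 1 r) (Derive_n x 3 r)
                                         (Derive_n y 1 r) (Derive_n y 3 r)) t 0).
  { apply (is_derive_of_locally_const _ _ 0), inI_locally_forall with lo hi; auto.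
    apply ea_det_d1_eq_0. }
  pose proof (dx 1 t Ht). pose proof (dx 3 t Ht). pose proof (dy 1 t Ht). pose proof (dy 3 t Ht).
  rewrite <- (is_derive_unique _ _ _ H). unfold det_d1, det_d2.
  symmetry. apply is_derive_unique. auto_derive_from_hyps. simpl. ring.
Qed.

Definition kap t := Derive_n x 2 t * Derive_n y 3 t - Derive_n y 2 t * Derive_n x 3 t.
Definition kap1 t := Derive_n x 2 t * Derive_n y 4 t - Derive_n y 2 t * Derive_n x 4 t.
Definition kap2 t := Derive_n x 3 t * Derive_n y 4 t + Derive_n x 2 t * Derive_n y 5 t
                   - Derive_n y 3 t * Derive_n x 4 t - Derive_n y 2 t * Derive_n x 5 t.

Lemma ea_curv_eq_kap t : inI lo hi t -> ea_curv x y t = kap t.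
Proof.
  intros Ht.
  assert (Hphi : ea_phi x y t = 1).
  { unfold ea_phi, Rpower. rewrite Hdet, ln_1, Rmult_0_r by exact Ht. apply exp_0. }
  rewrite <- (Rmult_1_r (ea_curv x y t)), <- Hphi, ea_curv_phi_eq_curv_poly.
  - rewrite Hdet, inv_cbrt_1 by exact Ht.
    unfold curv_poly, normal_coord, normal_coord_d1, q_rate, q_rate_d1. cbv zeta.
    rewrite (ea_det_d1_eq_0 t Ht), (ea_det_d2_eq_0 t Ht). unfold kap. field.
  - apply inI_locally_forall with lo hi; auto. intros s Hs. split.
    + rewrite Hdet by exact Hs. lra.
    + intros n. split; [apply (Hsx (S n) s Hs) | apply (Hsy (S n) s Hs)].
Qed.

Lemma Derive_n_3_xy t : inI lo hi t ->
  Derive_n x 3 t = - kap t * Derive_n x 1 t /\ Derive_n y 3 t = - kap t * Derive_n y 1 t.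
Proof.
  intros Ht. apply unimodular_frame; [apply (Hdet t Ht) | apply (ea_det_d1_eq_0 t Ht)].
Qed.

Lemma kap_is_derive t : inI lo hi t -> is_derive kap t (kap1 t).
Proof.
  intros Ht.
  pose proof (dx 2 t Ht). pose proof (dx 3 t Ht). pose proof (dy 2 t Ht). pose proof (dy 3 t Ht).
  unfold kap, kap1. auto_derive_from_hyps. simpl. ring.
Qed.

Lemma kap1_is_derive t : inI lo hi t -> is_derive kap1 t (kap2 t).
Proof.
  intros Ht.
  pose proof (dx 2 t Ht). pose proof (dx 4 t Ht). pose proof (dy 2 t Ht). pose proof (dy 4 t Ht).
  unfold kap1, kap2. auto_derive_from_hyps. simpl. ring.
Qed.

Section Higher.
Variable c : R -> R.
Hypotheses (Hsc : smooth_on lo hi c)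
  (Hc3 : forall t, inI lo hi t -> Derive_n c 3 t = - kap t * Derive_n c 1 t).

Lemma Derive_n_4_frame t : inI lo hi t ->
  Derive_n c 4 t = - kap1 t * Derive_n c 1 t - kap t * Derive_n c 2 t.
Proof.
  intros Ht. apply is_derive_unique.
  apply is_derive_ext_loc with (fun s => - kap s * Derive_n c 1 s).
  - apply inI_locally_forall with lo hi; auto. intros s Hs. symmetry. apply Hc3, Hs.
  - pose proof (kap_is_derive t Ht). pose proof (smooth_on_is_derive lo hi c 1 t Hsc Ht).
    auto_derive_from_hyps. simpl. ring.
Qed.

Lemma Derive_n_5_frame t : inI lo hi t ->
  Derive_n c 5 t = - kap2 t * Derive_n c 1 t - 2 * kap1 t * Derive_n c 2 t
                   + kap t ^ 2 * Derive_n c 1 t.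
Proof.
  intros Ht. apply is_derive_unique.
  apply is_derive_ext_loc with (fun s => - kap1 s * Derive_n c 1 s - kap s * Derive_n c 2 s).
  - apply inI_locally_forall with lo hi; auto. intros s Hs. symmetry. apply Derive_n_4_frame, Hs.
  - pose proof (kap_is_derive t Ht). pose proof (kap1_is_derive t Ht).
    pose proof (smooth_on_is_derive lo hi c 1 t Hsc Ht).
    pose proof (smooth_on_is_derive lo hi c 2 t Hsc Ht).
    auto_derive_from_hyps. rewrite (Hc3 t Ht). simpl. ring.
Qed.

End Higher.

Definition euler_lagrange t := Derive_n (ea_curv x y) 2 t + ea_curv x y t ^ 2.

Lemma euler_lagrange_eq t : inI lo hi t -> euler_lagrange t = kap2 t + kap t ^ 2.
Proof.
  intros Ht. unfold euler_lagrange. rewrite ea_curv_eq_kap by exact Ht. f_equal.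
  apply is_derive_unique. apply is_derive_ext_loc with kap1.
  - apply inI_locally_forall with lo hi; auto. intros s Hs. symmetry.
    apply is_derive_unique. apply is_derive_ext_loc with kap; [| apply kap_is_derive, Hs].
    apply inI_locally_forall with lo hi; auto. intros r Hr. symmetry. apply ea_curv_eq_kap, Hr.
  - apply kap1_is_derive, Ht.
Qed.

End UnitSpeed.

(** * The first variation *)

Definition variation_n (Z : R -> R -> R) (j : nat) (t : R) : R :=
  Derive (fun z => partial_t_n Z j z t) 0.

Lemma variation_n_is_derive lo hi Z j t : smooth2_on lo hi Z -> inI lo hi t ->
  is_derive (variation_n Z j) t (variation_n Z (S j) t).
Proof.
  intros HZ Ht. pose proof (smooth2_partial_t_n _ _ _ j HZ) as HZj.
  replace (variation_n Z (S j) t)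
    with (Derive (fun z => Derive (fun s => partial_t_n Z j z s) t) 0) by reflexivity.
  rewrite (smooth2_Schwarz _ _ _ 0 t HZj Ht).
  apply Derive_correct, (smooth2_ex_derive _ _ _ (smooth2_partial_u _ _ _ HZj) 0 t Ht).
Qed.

Lemma partial_t_n_is_derive_u lo hi Z j t : smooth2_on lo hi Z -> inI lo hi t ->
  is_derive (fun z => partial_t_n Z j z t) 0 (variation_n Z j t).
Proof.
  intros HZ Ht.
  apply Derive_correct, (smooth2_ex_derive _ _ _ (smooth2_partial_t_n _ _ _ j HZ) 0 t Ht).
Qed.

Lemma partial_t_n_at_0 lo hi (Z : R -> R -> R) z j t :
  (forall s, inI lo hi s -> Z 0 s = z s) -> inI lo hi t -> partial_t_n Z j 0 t = Derive_n z j t.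
Proof. intros H0 Ht. apply Derive_n_ext_loc, inI_locally_forall with lo hi; auto. Qed.

Lemma variation_n_affine (f g : R -> R) t :
  variation_n (fun u t => f t + u * g t) 0 t = g t.
Proof. unfold variation_n, partial_t_n. simpl. apply is_derive_unique. auto_derive; [exact I | ring]. Qed.

Lemma continuous_eq_0_of_adherent (f : R -> R) c :
  continuous f c -> (forall e : posreal, exists s, Rabs (s - c) < e /\ f s = 0) -> f c = 0.
Proof.
  intros Hc Hz. apply NNPP. intros Hn.
  assert (Hp : 0 < Rabs (f c)) by (apply Rabs_pos_lt, Hn).
  destruct (proj1 (filterlim_locally f (f c)) Hc (mkposreal _ Hp)) as [d Hd].
  destruct (Hz d) as (s & Hs & Hfs).
  pose proof (proj1 (ball_Rabs _ _ _) (Hd s (proj2 (ball_Rabs _ _ _) Hs))) as Hfc.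
  rewrite Hfs, Rminus_0_l, Rabs_Ropp in Hfc. simpl in Hfc. lra.
Qed.

Section Support.
Variables (lo hi : Rbar) (a b : R).
Hypotheses (Ha : inI lo hi a) (Hb : inI lo hi b).

Lemma outside_locally t : inI lo hi t -> t < a \/ b < t ->
  locally t (fun s => inI lo hi s /\ (s < a \/ b < s)).
Proof.
  intros [Hlo Hhi] [Hta | Hbt].
  - apply (locally_interval _ t lo a Hlo Hta). intros s Hs1 Hs2.
    split; [split; [exact Hs1 | apply Rbar_lt_trans with a; [exact Hs2 | apply Ha]] | left; exact Hs2].
  - apply (locally_interval _ t b hi Hbt Hhi). intros s Hs1 Hs2.
    split; [split; [apply Rbar_lt_trans with b; [apply Hb | exact Hs1] | exact Hs2] | right; exact Hs1].
Qed.

Variables (Z : R -> R -> R) (z : R -> R).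
Hypotheses (HZ : smooth2_on lo hi Z)
  (Hsupp : forall u s, inI lo hi s -> s < a \/ b < s -> Z u s = z s).

Lemma variation_n_outside j t : inI lo hi t -> t < a \/ b < t -> variation_n Z j t = 0.
Proof.
  intros Ht Hout. unfold variation_n, partial_t_n.
  rewrite (Derive_ext _ (fun _ => Derive_n z j t)); [apply Derive_const |].
  intros u. apply Derive_n_ext_loc. eapply filter_imp; [| apply outside_locally; eauto].
  intros s [Hs Hs']. apply Hsupp; assumption.
Qed.

Lemma variation_n_at_ends j : variation_n Z j a = 0 /\ variation_n Z j b = 0.
Proof.
  split; apply continuous_eq_0_of_adherent.
  1, 3: eapply is_derive_continuous, variation_n_is_derive; eauto.
  - intros e. destruct (inI_open _ _ _ Ha) as [e1 He1].
    assert (Hm : 0 < Rmin e e1) by (apply Rmin_pos; apply cond_pos).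
    pose proof (Rmin_l e e1). pose proof (Rmin_r e e1).
    exists (a - Rmin e e1 / 2).
    assert (Hs : Rabs (a - Rmin e e1 / 2 - a) < Rmin e e1) by (rewrite Rabs_left; lra).
    split; [lra |]. apply variation_n_outside; [apply He1 | left]; lra.
  - intros e. destruct (inI_open _ _ _ Hb) as [e1 He1].
    assert (Hm : 0 < Rmin e e1) by (apply Rmin_pos; apply cond_pos).
    pose proof (Rmin_l e e1). pose proof (Rmin_r e e1).
    exists (b + Rmin e e1 / 2).
    assert (Hs : Rabs (b + Rmin e e1 / 2 - b) < Rmin e e1) by (rewrite Rabs_right; lra).
    split; [lra |]. apply variation_n_outside; [apply He1 | right]; lra.
Qed.

End Support.

Lemma continuity_2d_pt_continuous_t f u t :
  continuity_2d_pt f u t -> continuous (fun s => f u s) t.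
Proof.
  intros H. apply filterlim_locally. intros eps. destruct (H eps) as [d Hd].
  exists d. intros s Hs. apply ball_Rabs. apply Hd; [| exact (proj1 (ball_Rabs _ _ _) Hs)].
  rewrite Rminus_eq_0, Rabs_R0. apply cond_pos.
Qed.

Lemma euler_lagrange_continuous lo hi x y t :
  smooth_on lo hi x -> smooth_on lo hi y -> (forall t, inI lo hi t -> ea_det x y t = 1) ->
  inI lo hi t -> continuous (euler_lagrange x y) t.
Proof.
  intros Hsx Hsy Hdet Ht.
  apply continuous_ext_loc with (fun s => kap2 x y s + kap x y s ^ 2).
  - apply inI_locally_forall with lo hi; auto. intros s Hs. symmetry.
    apply (euler_lagrange_eq lo hi); assumption.
  - assert (Hc : forall n, continuous (Derive_n x n) t /\ continuous (Derive_n y n) t).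
    { intros n. split; eapply is_derive_continuous, smooth_on_is_derive; eassumption. }
    unfold kap2, kap. destruct (Hc 2%nat), (Hc 3%nat), (Hc 4%nat), (Hc 5%nat). Rcontinuity.
Qed.

Section FirstVariation.
Variables (lo hi : Rbar) (x y : R -> R) (X Y : R -> R -> R) (a b : R).
Hypotheses (Hsx : smooth_on lo hi x) (Hsy : smooth_on lo hi y)
  (Hdet : forall t, inI lo hi t -> ea_det x y t = 1)
  (HX : smooth2_on lo hi X) (HY : smooth2_on lo hi Y)
  (H0 : forall t, inI lo hi t -> X 0 t = x t /\ Y 0 t = y t)
  (Ha : inI lo hi a) (Hb : inI lo hi b) (Hab : a <= b)
  (Hsupp : forall u t, inI lo hi t -> (t < a \/ b < t) -> X u t = x t /\ Y u t = y t).

Definition var_det u t := ea_det (X u) (Y u) t.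
Definition var_dom u t := inI lo hi t /\ 0 < var_det u t.
Definition var_density u t := ea_curv (X u) (Y u) t * ea_phi (X u) (Y u) t.
Definition var_density_poly u t :=
  curv_poly (partial_t_n X 1 u t) (partial_t_n X 2 u t) (partial_t_n X 3 u t) (partial_t_n X 4 u t)
            (partial_t_n Y 1 u t) (partial_t_n Y 2 u t) (partial_t_n Y 3 u t) (partial_t_n Y 4 u t)
            (inv_cbrt (var_det u t)).

Lemma var_det_continuity u t : inI lo hi t -> continuity_2d_pt var_det u t.
Proof.
  intros Ht.
  apply (continuity_2d_pt_minus (fun u t => partial_t_n X 1 u t * partial_t_n Y 2 u t)
                                (fun u t => partial_t_n Y 1 u t * partial_t_n X 2 u t));
    apply continuity_2d_pt_mult; apply (smooth2_continuity lo hi); auto;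
    apply smooth2_partial_t_n; assumption.
Qed.

Lemma var_dom_open : open2 var_dom.
Proof.
  intros u t [Ht Hp]. destruct (inI_open _ _ _ Ht) as [e1 He1].
  destruct (var_det_continuity u t Ht (mkposreal _ Hp)) as [e2 He2].
  assert (He : 0 < Rmin e1 e2) by (apply Rmin_pos; apply cond_pos).
  exists (mkposreal _ He). simpl. intros u' t' H1 H2. split.
  - apply He1. eapply Rlt_le_trans; [exact H2 | apply Rmin_l].
  - assert (K := He2 u' t' (Rlt_le_trans _ _ _ H1 (Rmin_r _ _))
                           (Rlt_le_trans _ _ _ H2 (Rmin_r _ _))).
    simpl in K. apply Rabs_lt_between in K. lra.
Qed.

Lemma C1u_of_smooth2 f : smooth2_on lo hi f -> C1u var_dom f.
Proof.
  intros H u t [Ht _]. split; [| split].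
  - apply (smooth2_continuity lo hi); auto.
  - exact (proj2 (smooth2_ex_derive lo hi f H u t Ht)).
  - apply (smooth2_continuity lo hi); auto. apply smooth2_partial_u, H.
Qed.

Lemma C1u_inv_cbrt_var_det : C1u var_dom (fun u t => inv_cbrt (var_det u t)).
Proof.
  apply C1u_inv_cbrt; [exact var_dom_open | | intros u t [_ H]; exact H].
  apply (C1u_minus _ var_dom_open (fun u t => partial_t_n X 1 u t * partial_t_n Y 2 u t)
                                  (fun u t => partial_t_n Y 1 u t * partial_t_n X 2 u t));
    apply C1u_mult; try exact var_dom_open; apply C1u_of_smooth2, smooth2_partial_t_n; assumption.
Qed.

Lemma C1u_var_density_poly : C1u var_dom var_density_poly.
Proof.
  unfold var_density_poly, curv_poly, normal_coord, normal_coord_d1, q_rate, q_rate_d1,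
    det_d1, det_d2, Rdiv.
  repeat first
  [ exact C1u_inv_cbrt_var_det
  | apply C1u_of_smooth2, smooth2_partial_t_n; assumption
  | apply C1u_minus; [exact var_dom_open | |]
  | apply C1u_plus; [exact var_dom_open | |]
  | apply C1u_mult; [exact var_dom_open | |]
  | apply C1u_pow; [exact var_dom_open |]
  | apply C1u_opp; [exact var_dom_open |]
  | apply C1u_const ].
Qed.

Lemma var_density_eq_poly_locally u t : var_dom u t ->
  locally_2d (fun u' t' => var_density u' t' = var_density_poly u' t') u t.
Proof.
  intros H. apply (open2_locally_2d var_dom var_dom_open); [exact H |].
  intros u' t' H'. apply ea_curv_phi_eq_curv_poly.
  eapply filter_imp; [| exact (locally_2d_1d_const_x _ _ _ (var_dom_open u' t' H'))].
  intros s [Hs Hp]. split; [exact Hp |].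
  intros n. split.
  - exact (proj1 (smooth2_ex_derive lo hi _ (smooth2_partial_t_n _ _ _ n HX) u' s Hs)).
  - exact (proj1 (smooth2_ex_derive lo hi _ (smooth2_partial_t_n _ _ _ n HY) u' s Hs)).
Qed.

Lemma var_det_0 t : inI lo hi t -> var_det 0 t = 1.
Proof.
  intros Ht. rewrite <- (Hdet t Ht).
  change (partial_t_n X 1 0 t * partial_t_n Y 2 0 t - partial_t_n Y 1 0 t * partial_t_n X 2 0 t
          = ea_det x y t).
  rewrite !(partial_t_n_at_0 lo hi X x), !(partial_t_n_at_0 lo hi Y y) by
    (assumption || (intros; apply H0; assumption)).
  reflexivity.
Qed.

Lemma var_dom_0 t : inI lo hi t -> var_dom 0 t.
Proof. intros Ht. split; [exact Ht |]. rewrite var_det_0 by exact Ht. lra. Qed.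

(* Compactness of [a, b] gives a uniform [u]-neighbourhood on which all varied curves
   are nondegenerate. *)
Lemma var_dom_uniform : exists d : posreal, forall u t, Rabs u < d -> a <= t <= b -> var_dom u t.
Proof.
  assert (Hloc : forall t, exists d : posreal,
    a <= t <= b -> forall u s, Rabs u < d -> Rabs (s - t) < d -> var_dom u s).
  { intros t. destruct (classic (a <= t <= b)) as [Ht | Ht].
    - destruct (var_dom_open 0 t (var_dom_0 t (inI_between lo hi a b t Ha Hb Ht))) as [d Hd].
      exists d. intros _ u s Hu Hs. apply Hd; [rewrite Rminus_0_r |]; assumption.
    - exists (mkposreal 1 Rlt_0_1). intros H; contradiction. }
  set (delta := fun t => proj1_sig (constructive_indefinite_description _ (Hloc t))).
  destruct (compactness_value_1d a b delta) as [d Hd].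
  exists d. intros u t Hu Ht. apply NNPP. intros HN. apply (Hd t Ht).
  intros [t0 (Ht0 & H1 & H2)]. apply HN.
  apply (proj2_sig (constructive_indefinite_description _ (Hloc t0)) Ht0);
    [eapply Rlt_le_trans; [exact Hu | exact H2] | exact H1].
Qed.

Let dX j t Ht := partial_t_n_is_derive_u lo hi X j t HX Ht.
Let dY j t Ht := partial_t_n_is_derive_u lo hi Y j t HY Ht.
Let X_at_0 j t := partial_t_n_at_0 lo hi X x j t (fun s Hs => proj1 (H0 s Hs)).
Let Y_at_0 j t := partial_t_n_at_0 lo hi Y y j t (fun s Hs => proj2 (H0 s Hs)).

Lemma Derive_var_density t : inI lo hi t -> Derive (fun u => var_density u t) 0 =
  Derive (fun e => curv_poly
    (Derive_n x 1 t + e * variation_n X 1 t) (Derive_n x 2 t + e * variation_n X 2 t)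
    (Derive_n x 3 t + e * variation_n X 3 t) (Derive_n x 4 t + e * variation_n X 4 t)
    (Derive_n y 1 t + e * variation_n Y 1 t) (Derive_n y 2 t + e * variation_n Y 2 t)
    (Derive_n y 3 t + e * variation_n Y 3 t) (Derive_n y 4 t + e * variation_n Y 4 t)
    (1 + e * (-(1/3) * (variation_n X 1 t * Derive_n y 2 t + Derive_n x 1 t * variation_n Y 2 t
                        - variation_n Y 1 t * Derive_n x 2 t - Derive_n y 1 t * variation_n X 2 t)))) 0.
Proof.
  intros Ht.
  rewrite (Derive_ext_loc _ (fun u => var_density_poly u t) 0)
    by exact (locally_2d_1d_const_y _ _ _ (var_density_eq_poly_locally 0 t (var_dom_0 t Ht))).
  pose proof (dX 1%nat t Ht). pose proof (dX 2%nat t Ht).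
  pose proof (dY 1%nat t Ht). pose proof (dY 2%nat t Ht).
  assert (HD : is_derive (fun z => var_det z t) 0
    (variation_n X 1 t * partial_t_n Y 2 0 t + partial_t_n X 1 0 t * variation_n Y 2 t
     - (variation_n Y 1 t * partial_t_n X 2 0 t + partial_t_n Y 1 0 t * variation_n X 2 t))).
  { change (fun z => var_det z t) with (fun z =>
      partial_t_n X 1 z t * partial_t_n Y 2 z t - partial_t_n Y 1 z t * partial_t_n X 2 z t).
    set (p1 := fun z => partial_t_n X 1 z t) in *. set (p2 := fun z => partial_t_n X 2 z t) in *.
    set (q1 := fun z => partial_t_n Y 1 z t) in *. set (q2 := fun z => partial_t_n Y 2 z t) in *.
    change (is_derive (fun z => p1 z * q2 z - q1 z * p2 z) 0
      (variation_n X 1 t * q2 0 + p1 0 * variation_n Y 2 t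
       - (variation_n Y 1 t * p2 0 + q1 0 * variation_n X 2 t))).
    auto_derive_from_hyps. ring. }
  unfold var_density_poly.
  etransitivity.
  { apply (Derive_curv_poly_comp _ _ _ _ _ _ _ _ _ 0 _ _ _ _ _ _ _ _ _
    (dX 1%nat t Ht) (dX 2%nat t Ht) (dX 3%nat t Ht) (dX 4%nat t Ht)
    (dY 1%nat t Ht) (dY 2%nat t Ht) (dY 3%nat t Ht) (dY 4%nat t Ht)
    (inv_cbrt_comp_is_derive (fun z => var_det z t) 0 _ (proj2 (var_dom_0 t Ht)) HD)). }
  rewrite !X_at_0, !Y_at_0, var_det_0, inv_cbrt_1 by exact Ht.
  apply Derive_ext. intros e. f_equal. ring.
Qed.

Definition flux_t t :=
  flux (Derive_n x 1 t) (Derive_n x 2 t) (Derive_n x 3 t) (Derive_n x 4 t)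
       (Derive_n y 1 t) (Derive_n y 2 t) (Derive_n y 3 t) (Derive_n y 4 t)
       (variation_n X 0 t) (variation_n X 1 t) (variation_n X 2 t) (variation_n X 3 t)
       (variation_n Y 0 t) (variation_n Y 1 t) (variation_n Y 2 t) (variation_n Y 3 t).

Definition var_integrand t := 2/3 * euler_lagrange x y t *
  (Derive_n x 1 t * variation_n Y 0 t - Derive_n y 1 t * variation_n X 0 t).

Lemma flux_t_is_derive t : inI lo hi t ->
  is_derive flux_t t (Derive (fun u => var_density u t) 0 - var_integrand t).
Proof.
  intros Ht.
  pose proof (fun n => smooth_on_is_derive lo hi x n t Hsx Ht) as Dx.
  pose proof (fun n => smooth_on_is_derive lo hi y n t Hsy Ht) as Dy.
  pose proof (fun j => variation_n_is_derive lo hi X j t HX Ht) as VX.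
  pose proof (fun j => variation_n_is_derive lo hi Y j t HY Ht) as VY.
  eapply is_derive_ext; [intros; reflexivity |].
  replace (Derive (fun u => var_density u t) 0 - var_integrand t) with
    (Derive (fun e => flux
      (Derive_n x 1 t + e * Derive_n x 2 t) (Derive_n x 2 t + e * Derive_n x 3 t)
      (Derive_n x 3 t + e * Derive_n x 4 t) (Derive_n x 4 t + e * Derive_n x 5 t)
      (Derive_n y 1 t + e * Derive_n y 2 t) (Derive_n y 2 t + e * Derive_n y 3 t)
      (Derive_n y 3 t + e * Derive_n y 4 t) (Derive_n y 4 t + e * Derive_n y 5 t)
      (variation_n X 0 t + e * variation_n X 1 t) (variation_n X 1 t + e * variation_n X 2 t)
      (variation_n X 2 t + e * variation_n X 3 t) (variation_n X 3 t + e * variation_n X 4 t)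
      (variation_n Y 0 t + e * variation_n Y 1 t) (variation_n Y 1 t + e * variation_n Y 2 t)
      (variation_n Y 2 t + e * variation_n Y 3 t) (variation_n Y 3 t + e * variation_n Y 4 t)) 0).
  - apply is_derive_flux_comp; auto.
  - destruct (Derive_n_3_xy lo hi x y Hsx Hsy Hdet t Ht) as [Ex3 Ey3].
    pose proof (Derive_n_3_xy lo hi x y Hsx Hsy Hdet) as E3.
    unfold var_integrand.
    rewrite (Derive_var_density t Ht), (euler_lagrange_eq lo hi x y Hsx Hsy Hdet t Ht).
    rewrite (Derive_n_5_frame lo hi x y Hsx Hsy x Hsx (fun s Hs => proj1 (E3 s Hs)) t Ht),
      (Derive_n_5_frame lo hi x y Hsx Hsy y Hsy (fun s Hs => proj2 (E3 s Hs)) t Ht),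
      (Derive_n_4_frame lo hi x y Hsx Hsy x Hsx (fun s Hs => proj1 (E3 s Hs)) t Ht),
      (Derive_n_4_frame lo hi x y Hsx Hsy y Hsy (fun s Hs => proj2 (E3 s Hs)) t Ht),
      Ex3, Ey3.
    rewrite (curv_poly_first_variation _ _ _ _ (kap x y t) (kap1 x y t) (kap2 x y t)
               (variation_n X 0 t) _ _ _ _ (variation_n Y 0 t))
      by exact (Hdet t Ht).
    ring.
Qed.

Lemma flux_t_at_ends : flux_t a = 0 /\ flux_t b = 0.
Proof.
  pose proof (fun j => variation_n_at_ends lo hi a b Ha Hb X x HX
                         (fun u s Hs Hout => proj1 (Hsupp u s Hs Hout)) j) as VX.
  pose proof (fun j => variation_n_at_ends lo hi a b Ha Hb Y y HY
                         (fun u s Hs Hout => proj2 (Hsupp u s Hs Hout)) j) as VY.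
  unfold flux_t, flux.
  split; rewrite ?(proj1 (VX _)), ?(proj1 (VY _)), ?(proj2 (VX _)), ?(proj2 (VY _)); ring.
Qed.

Lemma var_integrand_continuous t : inI lo hi t -> continuous var_integrand t.
Proof.
  intros Ht. unfold var_integrand.
  pose proof (euler_lagrange_continuous lo hi x y t Hsx Hsy Hdet Ht).
  pose proof (is_derive_continuous _ _ _ (smooth_on_is_derive lo hi x 1 t Hsx Ht)).
  pose proof (is_derive_continuous _ _ _ (smooth_on_is_derive lo hi y 1 t Hsy Ht)).
  pose proof (is_derive_continuous _ _ _ (variation_n_is_derive lo hi X 0 t HX Ht)).
  pose proof (is_derive_continuous _ _ _ (variation_n_is_derive lo hi Y 0 t HY Ht)).
  Rcontinuity.
Qed.

Lemma Derive_var_density_continuity t : inI lo hi t ->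
  continuity_2d_pt (fun u v => Derive (fun z => var_density z v) u) 0 t.
Proof.
  intros Ht. apply continuity_2d_pt_ext_loc with (partial_u var_density_poly).
  - destruct (var_dom_open 0 t (var_dom_0 t Ht)) as [e He]. exists e. intros u v Hu Hv.
    unfold partial_u. apply Derive_ext_loc.
    eapply filter_imp; [| exact (locally_2d_1d_const_y _ _ _
                                   (var_density_eq_poly_locally u v (He u v Hu Hv)))].
    intros z Hz. symmetry. exact Hz.
  - exact (proj2 (proj2 (C1u_var_density_poly 0 t (var_dom_0 t Ht)))).
Qed.

(* Differentiation under the integral sign, then integration by parts: the boundary term
   [flux_t] vanishes at [a] and [b] because the variation is supported in [a, b]. *)
Theorem first_variation :
  is_derive (fun u => total_ea_curv (X u) (Y u) a b) 0 (RInt var_integrand a b).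
Proof.
  destruct var_dom_uniform as [d Hd].
  assert (HIab : forall t, Rmin a b <= t <= Rmax a b -> inI lo hi t).
  { rewrite Rmin_left, Rmax_right by exact Hab. intros t Ht. apply (inI_between lo hi a b); assumption. }
  assert (Hdom : forall u t, Rabs u < d -> Rmin a b <= t <= Rmax a b -> var_dom u t).
  { rewrite Rmin_left, Rmax_right by exact Hab. exact Hd. }
  assert (Hloc : locally 0 (fun u => Rabs u < d)).
  { exists d. intros u Hu. rewrite <- (Rminus_0_r u). exact (proj1 (ball_Rabs _ _ _) Hu). }
  assert (HP : is_derive (fun u => RInt (fun t => var_density u t) a b) 0
                 (RInt (fun t => Derive (fun u => var_density u t) 0) a b)).
  { apply (is_derive_RInt_param var_density a b 0).
    - eapply filter_imp; [| exact Hloc]. intros u0 Hu0 t Ht.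
      apply ex_derive_ext_loc with (fun z => var_density_poly z t).
      + eapply filter_imp; [| exact (locally_2d_1d_const_y _ _ _
                                       (var_density_eq_poly_locally u0 t (Hdom u0 t Hu0 Ht)))].
        intros z Hz. symmetry. exact Hz.
      + exact (proj1 (proj2 (C1u_var_density_poly u0 t (Hdom u0 t Hu0 Ht)))).
    - intros t Ht. apply Derive_var_density_continuity, HIab, Ht.
    - eapply filter_imp; [| exact Hloc]. intros u Hu.
      apply (@ex_RInt_continuous R_CompleteNormedModule). intros t Ht.
      apply continuous_ext_loc with (fun s => var_density_poly u s).
      + eapply filter_imp; [| exact (locally_2d_1d_const_x _ _ _
                                       (var_density_eq_poly_locally u t (Hdom u t Hu Ht)))].
        intros z Hz. symmetry. exact Hz.
      + apply continuity_2d_pt_continuous_t, (C1u_var_density_poly u t (Hdom u t Hu Ht)). }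
  assert (HG : is_RInt (fun t => Derive (fun u => var_density u t) 0 - var_integrand t) a b
                 (minus (flux_t b) (flux_t a))).
  { apply (is_RInt_derive flux_t).
    - intros t Ht. apply flux_t_is_derive, HIab, Ht.
    - intros t Ht. apply Rcontinuous_minus.
      + apply (continuity_2d_pt_continuous_t (fun u v => Derive (fun z => var_density z v) u)).
        apply Derive_var_density_continuity, HIab, Ht.
      + apply var_integrand_continuous, HIab, Ht. }
  destruct flux_t_at_ends as [Fa Fb]. rewrite Fa, Fb, minus_eq_zero in HG.
  assert (Hc : ex_RInt var_integrand a b).
  { apply (@ex_RInt_continuous R_CompleteNormedModule). intros t Ht.
    apply var_integrand_continuous, HIab, Ht. }
  replace (RInt var_integrand a b)
    with (RInt (fun t => Derive (fun u => var_density u t) 0) a b); [exact HP |].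
  pose proof (is_RInt_plus _ _ a b _ _ HG (RInt_correct _ _ _ Hc)) as HS.
  rewrite plus_zero_l in HS.
  apply is_RInt_unique. eapply is_RInt_ext; [| exact HS]. intros t _. unfold plus; simpl. ring.
Qed.

End FirstVariation.

(** * Bump functions *)

Fixpoint peval (p : list R) (y : R) : R :=
  match p with nil => 0 | c :: q => c + y * peval q y end.
Fixpoint padd (p q : list R) : list R :=
  match p, q with
  | nil, _ => q
  | _, nil => p
  | a :: p', b :: q' => (a + b) :: padd p' q'
  end.
Definition pneg (p : list R) : list R := map Ropp p.
Fixpoint pderiv (p : list R) : list R :=
  match p with nil => nil | c :: q => padd q (0 :: pderiv q) end.
Fixpoint pabs_sum (p : list R) : R :=
  match p with nil => 0 | c :: q => Rabs c + pabs_sum q end.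

Lemma pabs_sum_nonneg p : 0 <= pabs_sum p.
Proof. induction p as [| c q IH]; simpl; [lra | pose proof (Rabs_pos c); lra]. Qed.

Lemma peval_padd p q y : peval (padd p q) y = peval p y + peval q y.
Proof.
  revert q. induction p as [| a p IH]; intros q; simpl; [ring |].
  destruct q as [| b q]; simpl; [ring |]. rewrite IH. ring.
Qed.

Lemma peval_pneg p y : peval (pneg p) y = - peval p y.
Proof. induction p as [| a p IH]; simpl; [ring |]. rewrite IH. ring. Qed.

Lemma peval_is_derive p y : is_derive (peval p) y (peval (pderiv p) y).
Proof.
  induction p as [| c q IH]; simpl.
  - apply (is_derive_const (V := R_NormedModule)).
  - rewrite peval_padd. simpl. auto_derive; [eexists; exact IH |].
    change (Derive (fun x => peval q x) y) with (Derive (peval q) y).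
    rewrite (is_derive_unique _ _ _ IH). ring.
Qed.

Lemma peval_bound p y : 1 <= y -> Rabs (peval p y) <= pabs_sum p * y ^ length p.
Proof.
  intros Hy. induction p as [| c q IH]; simpl; [rewrite Rabs_R0; lra |].
  eapply Rle_trans; [apply Rabs_triang |]. rewrite Rabs_mult, (Rabs_right y) by lra.
  assert (H1 : 1 <= y ^ length q) by (apply pow_R1_Rle; lra).
  assert (H2 : Rabs c <= Rabs c * (y * y ^ length q)).
  { rewrite <- (Rmult_1_r (Rabs c)) at 1. apply Rmult_le_compat_l; [apply Rabs_pos | nra]. }
  assert (H3 : y * Rabs (peval q y) <= y * (pabs_sum q * y ^ length q))
    by (apply Rmult_le_compat_l; lra).
  nra.
Qed.

Lemma exp_INR_mult k z : exp (INR k * z) = exp z ^ k.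
Proof.
  induction k; [simpl; rewrite Rmult_0_l; apply exp_0 |].
  rewrite S_INR, Rmult_plus_distr_r, Rmult_1_l, exp_plus, IHk. simpl. ring.
Qed.

Lemma pow_le_exp n y : 0 < y -> y ^ S n <= (INR n + 1) ^ S n * exp y.
Proof.
  intros Hy.
  assert (Hn : 0 < INR n + 1) by (pose proof (pos_INR n); lra).
  assert (E : exp y = exp (y / (INR n + 1)) ^ S n).
  { rewrite <- exp_INR_mult. f_equal. rewrite S_INR. field. lra. }
  rewrite E.
  replace (y ^ S n) with ((INR n + 1) ^ S n * (y / (INR n + 1)) ^ S n)
    by (rewrite <- Rpow_mult_distr; f_equal; field; lra).
  apply Rmult_le_compat_l; [apply pow_le; lra |].
  apply pow_incr. split; [apply Rlt_le, Rdiv_lt_0_compat; lra |].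
  pose proof (exp_ineq1_le (y / (INR n + 1))). lra.
Qed.

(* [exp_inv_poly p s = p(1/s) exp(-1/s)] for [s > 0] and [0] otherwise; its derivative is
   [exp_inv_poly (pstep p)] with [pstep p = X^2 (p - p')]. *)
Definition exp_inv_poly (p : list R) (s : R) : R :=
  if Rlt_dec 0 s then peval p (/ s) * exp (- / s) else 0.
Definition pstep (p : list R) : list R := 0 :: 0 :: padd p (pneg (pderiv p)).

Lemma exp_inv_poly_is_derive_pos p s : 0 < s ->
  is_derive (exp_inv_poly p) s (exp_inv_poly (pstep p) s).
Proof.
  intros Hs.
  apply is_derive_ext_loc with (fun r => peval p (/ r) * exp (- / r)).
  - apply (locally_interval _ s 0 p_infty Hs I). intros r Hr _.
    unfold exp_inv_poly. destruct (Rlt_dec 0 r); [reflexivity | contradiction].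
  - unfold exp_inv_poly. destruct (Rlt_dec 0 s) as [_ | n]; [| contradiction].
    pose proof (peval_is_derive p (/ s)) as Hp.
    auto_derive.
    + split; [eexists; exact Hp |]. repeat split; try exact I; lra.
    + change (Derive (fun x => peval p x) (/ s)) with (Derive (peval p) (/ s)).
      rewrite (is_derive_unique _ _ _ Hp). unfold pstep. simpl.
      rewrite peval_padd, peval_pneg. field. lra.
Qed.

Lemma exp_inv_poly_is_derive_neg p s : s < 0 ->
  is_derive (exp_inv_poly p) s (exp_inv_poly (pstep p) s).
Proof.
  intros Hs.
  apply is_derive_ext_loc with (fun _ => 0).
  - apply (locally_interval _ s m_infty 0 I Hs). intros r _ Hr.
    unfold exp_inv_poly. destruct (Rlt_dec 0 r) as [H |]; [simpl in Hr; lra | reflexivity].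
  - unfold exp_inv_poly. destruct (Rlt_dec 0 s) as [H | _]; [lra |].
    apply (is_derive_const (V := R_NormedModule)).
Qed.

(* The flatness at [0]: [p(1/h) exp(-1/h) / h = O(h)] since [exp] beats every power. *)
Lemma exp_inv_poly_quotient_bound p h : 0 < h < 1 ->
  Rabs (peval p (/ h) * exp (- / h) / h)
  <= pabs_sum p * (INR (S (length p)) + 1) ^ S (S (length p)) * h.
Proof.
  intros [Hh0 Hh1].
  set (m := length p). set (C := (INR (S m) + 1) ^ S (S m)). set (y := / h).
  assert (Hy : 1 < y) by (unfold y; rewrite <- Rinv_1; apply Rinv_lt_contravar; lra).
  assert (Hb := peval_bound p y (Rlt_le _ _ Hy)). fold m in Hb.
  assert (Hexp := pow_le_exp (S m) y ltac:(lra)). fold C in Hexp.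
  assert (He : 0 < exp y) by apply exp_pos.
  pose proof (pabs_sum_nonneg p) as HS.
  replace (peval p y * exp (- y) / h) with (peval p y * y / exp y)
    by (unfold y; rewrite exp_Ropp; field; split; [apply Rgt_not_eq, exp_pos | lra]).
  rewrite Rabs_div, Rabs_mult, (Rabs_right y), (Rabs_right (exp y)) by lra.
  replace h with (/ y) by (unfold y; field; lra).
  apply Rle_trans with (pabs_sum p * y ^ m * y / exp y).
  - unfold Rdiv. apply Rmult_le_compat_r; [left; apply Rinv_0_lt_compat; lra |].
    apply Rmult_le_compat_r; lra.
  - replace (y ^ S (S m)) with (y ^ m * y * y) in Hexp by (simpl; ring).
    apply (Rmult_le_reg_r (exp y * y)); [nra |].
    replace (pabs_sum p * y ^ m * y / exp y * (exp y * y)) with (pabs_sum p * (y ^ m * y * y))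
      by (field; lra).
    replace (pabs_sum p * C * / y * (exp y * y)) with (pabs_sum p * (C * exp y)) by (field; lra).
    apply Rmult_le_compat_l; assumption.
Qed.

Lemma exp_inv_poly_is_derive_0 p : is_derive (exp_inv_poly p) 0 (exp_inv_poly (pstep p) 0).
Proof.
  unfold exp_inv_poly at 2. destruct (Rlt_dec 0 0); [lra |].
  apply is_derive_Reals. intros eps Heps.
  set (K := pabs_sum p * (INR (S (length p)) + 1) ^ S (S (length p))).
  assert (HK : 0 <= K).
  { apply Rmult_le_pos; [apply pabs_sum_nonneg | apply pow_le; pose proof (pos_INR (S (length p))); lra]. }
  assert (Hd : 0 < Rmin 1 (eps / (K + 1))) by (apply Rmin_pos; [lra | apply Rdiv_lt_0_compat; lra]).
  exists (mkposreal _ Hd). simpl. intros h Hh0 Hh.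
  pose proof (Rmin_l 1 (eps / (K + 1))). pose proof (Rmin_r 1 (eps / (K + 1))).
  rewrite Rplus_0_l. unfold exp_inv_poly. destruct (Rlt_dec 0 0); [lra |].
  destruct (Rlt_dec 0 h) as [Hp | Hn].
  - rewrite Rabs_right in Hh by lra.
    replace ((peval p (/ h) * exp (- / h) - 0) / h - 0)
      with (peval p (/ h) * exp (- / h) / h) by (field; lra).
    eapply Rle_lt_trans; [apply exp_inv_poly_quotient_bound; lra |]. fold K.
    apply Rle_lt_trans with ((K + 1) * h); [nra |].
    apply Rlt_le_trans with ((K + 1) * (eps / (K + 1))); [apply Rmult_lt_compat_l; lra |].
    right. field. lra.
  - replace ((0 - 0) / h - 0) with 0 by (field; exact Hh0). rewrite Rabs_R0. exact Heps.
Qed.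

Lemma exp_inv_poly_is_derive p s : is_derive (exp_inv_poly p) s (exp_inv_poly (pstep p) s).
Proof.
  destruct (total_order_T s 0) as [[H | H] | H].
  - apply exp_inv_poly_is_derive_neg, H.
  - subst. apply exp_inv_poly_is_derive_0.
  - apply exp_inv_poly_is_derive_pos, H.
Qed.

Fixpoint diff_n (n : nat) (f : R -> R) : Prop :=
  match n with O => True | S m => (forall s, ex_derive f s) /\ diff_n m (Derive f) end.

Lemma diff_n_ext n : forall f g, (forall s, f s = g s) -> diff_n n f -> diff_n n g.
Proof.
  induction n; intros f g E H; simpl; auto. destruct H as [H1 H2]. split.
  - intros s. apply ex_derive_ext with f; auto.
  - apply IHn with (Derive f); auto. intros s. apply Derive_ext. auto.
Qed.

Lemma diff_n_S_le n : forall f, diff_n (S n) f -> diff_n n f.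
Proof. induction n; intros f H; simpl; auto. destruct H as [H1 H2]. split; auto. Qed.

Lemma diff_n_const n c : diff_n n (fun _ => c).
Proof.
  revert c. induction n; intros c; simpl; auto. split.
  - intros s. apply ex_derive_const.
  - apply diff_n_ext with (fun _ => 0); [intros s; symmetry; apply Derive_const | apply IHn].
Qed.

Lemma diff_n_plus n : forall f g, diff_n n f -> diff_n n g -> diff_n n (fun s => f s + g s).
Proof.
  induction n; intros f g Hf Hg; simpl; auto. destruct Hf as [F1 F2], Hg as [G1 G2]. split.
  - intros s. auto_derive. auto.
  - apply diff_n_ext with (fun s => Derive f s + Derive g s); [| apply IHn; auto].
    intros s. symmetry. apply (Derive_plus f g); auto.
Qed.

Lemma diff_n_mult n : forall f g, diff_n n f -> diff_n n g -> diff_n n (fun s => f s * g s).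
Proof.
  induction n; intros f g Hf Hg; simpl; auto.
  pose proof (diff_n_S_le _ _ Hf). pose proof (diff_n_S_le _ _ Hg).
  destruct Hf as [F1 F2], Hg as [G1 G2]. split.
  - intros s. auto_derive. auto.
  - apply diff_n_ext with (fun s => Derive f s * g s + f s * Derive g s);
      [| apply diff_n_plus; apply IHn; auto].
    intros s. symmetry. apply Derive_mult; auto.
Qed.

Lemma diff_n_affine n : forall f (al be : R), diff_n n f -> diff_n n (fun t => f (al * t + be)).
Proof.
  induction n; intros f al be Hf; simpl; auto. destruct Hf as [F1 F2]. split.
  - intros s. auto_derive. exact (F1 _).
  - apply diff_n_ext with (fun t => al * Derive f (al * t + be));
      [| apply (diff_n_mult n (fun _ => al)); [apply diff_n_const | apply IHn, F2]].
    intros s. symmetry. apply is_derive_unique.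
    auto_derive; [exact (F1 _) |]. change (Derive (fun x => f x)) with (Derive f). ring.
Qed.

Lemma diff_n_exp_inv_poly n : forall p, diff_n n (exp_inv_poly p).
Proof.
  induction n; intros p; simpl; auto. split.
  - intros s. eexists. apply exp_inv_poly_is_derive.
  - apply diff_n_ext with (exp_inv_poly (pstep p)); [| apply IHn].
    intros s. symmetry. apply is_derive_unique, exp_inv_poly_is_derive.
Qed.

Lemma diff_n_ex_derive_n n : forall f, diff_n n f -> forall s, ex_derive_n f n s.
Proof.
  induction n; intros f H s; [exact I |].
  destruct n; [exact (proj1 H s) |].
  apply ex_derive_ext with (Derive_n (Derive f) n).
  - intros t. replace (S n) with (n + 1)%nat by lia. apply (Derive_n_comp f n 1).
  - apply (IHn (Derive f) (proj2 H) s).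
Qed.

Definition bump (c d t : R) : R :=
  exp_inv_poly (1 :: nil) (t - c) * exp_inv_poly (1 :: nil) (d - t).

Lemma diff_n_bump c d n : diff_n n (bump c d).
Proof.
  apply diff_n_ext with (fun t => exp_inv_poly (1 :: nil) (1 * t + - c)
                                  * exp_inv_poly (1 :: nil) (-1 * t + d)).
  - intros t. unfold bump. do 2 f_equal; ring.
  - apply (diff_n_mult n (fun t => exp_inv_poly _ (1 * t + - c))
                         (fun t => exp_inv_poly _ (-1 * t + d)));
      apply (diff_n_affine n (exp_inv_poly _)), diff_n_exp_inv_poly.
Qed.

Lemma bump_continuous c d t : continuous (bump c d) t.
Proof.
  apply (@ex_derive_continuous R_AbsRing R_NormedModule).
  exact (diff_n_ex_derive_n 1 _ (diff_n_bump c d 1) t).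
Qed.

Lemma bump_eq_0 c d t : ~ (c < t < d) -> bump c d t = 0.
Proof.
  intros H. unfold bump, exp_inv_poly.
  destruct (Rlt_dec 0 (t - c)); destruct (Rlt_dec 0 (d - t)); try ring.
  exfalso. apply H. lra.
Qed.

Lemma bump_pos c d t : c < t < d -> 0 < bump c d t.
Proof.
  intros H. unfold bump, exp_inv_poly.
  destruct (Rlt_dec 0 (t - c)); [| lra]. destruct (Rlt_dec 0 (d - t)); [| lra].
  simpl. rewrite !Rmult_0_r, !Rplus_0_r, !Rmult_1_l. apply Rmult_lt_0_compat; apply exp_pos.
Qed.

Lemma smooth_on_Derive lo hi f : smooth_on lo hi f -> smooth_on lo hi (Derive f).
Proof.
  intros H n t Ht. destruct n; [exact I |].
  apply ex_derive_ext with (Derive_n f (S n)); [| exact (H (S (S n)) t Ht)].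
  intros s. replace (S n) with (n + 1)%nat by lia. symmetry. apply (Derive_n_comp f n 1).
Qed.

Lemma smooth_on_const lo hi c : smooth_on lo hi (fun _ => c).
Proof. intros n t _. apply diff_n_ex_derive_n, diff_n_const. Qed.

Lemma C2k_ext lo hi k : forall f g,
  (forall u t, inI lo hi t -> f u t = g u t) -> C2k k lo hi f -> C2k k lo hi g.
Proof.
  induction k; intros f g E H.
  - intros u t Ht. apply continuous_ext_loc with (fun p : R * R => f (fst p) (snd p)); [| apply H, Ht].
    apply (proj1 (locally_2d_locally (fun u' t' => f u' t' = g u' t') u t)).
    destruct (inI_open _ _ _ Ht) as [e He]. exists e. intros u' t' _ Ht'. apply E, He, Ht'.
  - destruct H as (H1 & H2 & H3 & H4). split; [| split; [| split]].
    + intros u t Ht. destruct (H1 u t Ht) as [A B]. split.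
      * apply ex_derive_ext_loc with (fun s => f u s); auto.
        apply inI_locally_forall with lo hi; auto.
      * apply ex_derive_ext with (fun v => f v t); auto.
    + apply (IHk (fun u t => Derive (fun s => f u s) t)); auto.
      intros u t Ht. apply Derive_ext_loc, inI_locally_forall with lo hi; auto.
    + apply (IHk (fun u t => Derive (fun v => f v t) u)); auto.
      intros u t Ht. apply Derive_ext. auto.
    + apply (IHk f); auto.
Qed.

Lemma C2k_affine lo hi k : forall f g, smooth_on lo hi f -> smooth_on lo hi g ->
  C2k k lo hi (fun u t => f t + u * g t).
Proof.
  induction k; intros f g Hf Hg.
  - intros u t Ht.
    assert (Hcf : continuity_pt f t)
      by apply continuity_pt_filterlim, (@ex_derive_continuous R_AbsRing R_NormedModule), (Hf 1%nat t Ht).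
    assert (Hcg : continuity_pt g t)
      by apply continuity_pt_filterlim, (@ex_derive_continuous R_AbsRing R_NormedModule), (Hg 1%nat t Ht).
    apply (proj1 (continuity_2d_pt_filterlim (fun u t => f t + u * g t) u t)).
    apply continuity_2d_pt_plus; [| apply continuity_2d_pt_mult; [apply continuity_2d_pt_id1 |]];
      apply (continuity_1d_2d_pt_comp _ (fun _ t => t)); auto; apply continuity_2d_pt_id2.
  - pose proof (fun t Ht => Derive_correct f t (Hf 1%nat t Ht)) as Df.
    pose proof (fun t Ht => Derive_correct g t (Hg 1%nat t Ht)) as Dg.
    split; [| split; [| split]].
    + intros u t Ht. pose proof (Df t Ht). pose proof (Dg t Ht).
      split; auto_derive; repeat split; try exact I; eexists; eassumption.
    + apply (C2k_ext lo hi k (fun u t => Derive f t + u * Derive g t)).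
      * intros u t Ht. pose proof (Df t Ht). pose proof (Dg t Ht).
        symmetry. apply is_derive_unique. auto_derive_from_hyps. ring.
      * apply IHk; apply smooth_on_Derive; assumption.
    + apply (C2k_ext lo hi k (fun u t => g t + u * 0)); [| apply IHk; auto; apply smooth_on_const].
      intros u t Ht. symmetry. apply is_derive_unique. auto_derive; [exact I | ring].
    + apply IHk; assumption.
Qed.

Lemma smooth2_affine lo hi f g : smooth_on lo hi f -> smooth_on lo hi g ->
  smooth2_on lo hi (fun u t => f t + u * g t).
Proof. intros Hf Hg k. apply C2k_affine; assumption. Qed.

Lemma RInt_times_bump_pos lo hi (g : R -> R) t0 :
  (forall t, inI lo hi t -> continuous g t) -> inI lo hi t0 -> 0 < g t0 ->
  exists c d, inI lo hi c /\ inI lo hi d /\ c < d /\ 0 < RInt (fun t => g t * bump c d t) c d.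
Proof.
  intros Hc Ht0 Hp.
  destruct (proj1 (filterlim_locally g (g t0)) (Hc t0 Ht0) (mkposreal _ Hp)) as [dl Hdl].
  destruct (inI_open _ _ _ Ht0) as [e He].
  assert (Hm : 0 < Rmin dl e) by (apply Rmin_pos; apply cond_pos).
  pose proof (Rmin_l dl e). pose proof (Rmin_r dl e).
  set (c := t0 - Rmin dl e / 2). set (d := t0 + Rmin dl e / 2).
  assert (Hin : forall t, c <= t <= d -> inI lo hi t /\ 0 < g t).
  { intros t Ht. assert (Hl : Rabs (t - t0) < Rmin dl e) by (unfold c, d in Ht; apply Rabs_def1; lra).
    split; [apply He; lra |].
    pose proof (proj1 (ball_Rabs _ _ _) (Hdl t (proj2 (ball_Rabs t0 dl t) ltac:(lra)))) as Hg.
    apply Rabs_lt_between in Hg. simpl in Hg. lra. }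
  assert (Hcd : c < d) by (unfold c, d; lra).
  exists c, d. split; [apply Hin; lra | split; [apply Hin; lra | split; [exact Hcd |]]].
  apply RInt_gt_0; [exact Hcd | |].
  - intros t Ht. apply Rmult_lt_0_compat; [apply Hin; lra | apply bump_pos; lra].
  - intros t Ht. apply Rcontinuous_mult; [apply Hc, Hin; lra | apply bump_continuous].
Qed.

Lemma eq_0_of_RInt_times_bump lo hi (g : R -> R) t0 :
  (forall t, inI lo hi t -> continuous g t) ->
  (forall c d, inI lo hi c -> inI lo hi d -> c < d -> RInt (fun t => g t * bump c d t) c d = 0) ->
  inI lo hi t0 -> g t0 = 0.
Proof.
  intros Hc Hint Ht0.
  destruct (total_order_T (g t0) 0) as [[H | H] | H]; [exfalso | exact H | exfalso].
  - destruct (RInt_times_bump_pos lo hi (fun t => - g t) t0) as (c & d & Hc' & Hd' & Hcd & Hpos);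
      [intros t Ht; apply Rcontinuous_opp, Hc, Ht | exact Ht0 | lra |].
    assert (Hex : ex_RInt (fun t => g t * bump c d t) c d).
    { apply (@ex_RInt_continuous R_CompleteNormedModule). intros t Ht.
      rewrite Rmin_left, Rmax_right in Ht by lra.
      apply Rcontinuous_mult; [apply Hc, (inI_between lo hi c d); auto | apply bump_continuous]. }
    destruct Hex as [I0 HI0].
    assert (HI1 : is_RInt (fun t => - g t * bump c d t) c d (opp I0)).
    { eapply is_RInt_ext; [| apply is_RInt_opp, HI0]. intros t _. unfold opp; simpl. ring. }
    rewrite (is_RInt_unique _ _ _ _ HI1) in Hpos.
    pose proof (Hint c d Hc' Hd' Hcd) as E. rewrite (is_RInt_unique _ _ _ _ HI0) in E.
    rewrite E in Hpos. unfold opp in Hpos; simpl in Hpos. lra.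
  - destruct (RInt_times_bump_pos lo hi g t0 Hc Ht0 H) as (c & d & Hc' & Hd' & Hcd & Hpos).
    rewrite (Hint c d Hc' Hd' Hcd) in Hpos. lra.
Qed.

(** * Critical curves *)

Lemma eq_of_is_derive_0_on_inI lo hi (f : R -> R) :
  (forall t, inI lo hi t -> is_derive f t 0) ->
  forall t t0, inI lo hi t -> inI lo hi t0 -> f t = f t0.
Proof.
  intros Hd t t0 Ht Ht0.
  destruct (total_order_T t t0) as [[H | H] | H].
  - apply (eq_is_derive f t t0); [| exact H]. intros s Hs. apply Hd, (inI_between lo hi t t0); auto.
  - subst; reflexivity.
  - symmetry. apply (eq_is_derive f t0 t); [| exact H].
    intros s Hs. apply Hd, (inI_between lo hi t0 t); auto.
Qed.

Lemma smooth_on_scaled_bump lo hi al c d : smooth_on lo hi (fun t => al * bump c d t).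
Proof.
  intros n t _. apply diff_n_ex_derive_n, diff_n_mult; [apply diff_n_const | apply diff_n_bump].
Qed.

Section Criticality.
Variables (lo hi : Rbar) (x y : R -> R).
Hypotheses (Hsx : smooth_on lo hi x) (Hsy : smooth_on lo hi y)
  (Hdet : forall t, inI lo hi t -> ea_det x y t = 1).

Let Dx n t := smooth_on_is_derive lo hi x n t Hsx.
Let Dy n t := smooth_on_is_derive lo hi y n t Hsy.
Let Dkap t := kap_is_derive lo hi x y Hsx Hsy t.
Let Dkap1 t := kap1_is_derive lo hi x y Hsx Hsy t.

Lemma euler_lagrange_eq_0_of_linear A B :
  (forall t, inI lo hi t -> ea_curv x y t = A * Derive x t + B * Derive y t) ->
  forall t, inI lo hi t -> euler_lagrange x y t = 0.
Proof.
  intros HAB.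
  assert (Hlin : forall n t, inI lo hi t ->
    is_derive (fun r => A * Derive_n x n r + B * Derive_n y n r) t
              (A * Derive_n x (S n) t + B * Derive_n y (S n) t)).
  { intros n t Ht. pose proof (Dx n t Ht). pose proof (Dy n t Ht). auto_derive_from_hyps. ring. }
  assert (Hk : forall t, inI lo hi t -> kap x y t = A * Derive_n x 1 t + B * Derive_n y 1 t).
  { intros t Ht. rewrite <- (ea_curv_eq_kap lo hi x y Hsx Hsy Hdet t Ht). exact (HAB t Ht). }
  assert (Hk1 : forall t, inI lo hi t -> kap1 x y t = A * Derive_n x 2 t + B * Derive_n y 2 t).
  { intros t Ht. rewrite <- (is_derive_unique _ _ _ (Dkap t Ht)). apply is_derive_unique.
    apply is_derive_ext_loc with (fun r => A * Derive_n x 1 r + B * Derive_n y 1 r); [| apply Hlin, Ht].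
    apply inI_locally_forall with lo hi; [exact Ht |]. intros s Hs. symmetry. apply Hk, Hs. }
  assert (Hk2 : forall t, inI lo hi t -> kap2 x y t = A * Derive_n x 3 t + B * Derive_n y 3 t).
  { intros t Ht. rewrite <- (is_derive_unique _ _ _ (Dkap1 t Ht)). apply is_derive_unique.
    apply is_derive_ext_loc with (fun r => A * Derive_n x 2 r + B * Derive_n y 2 r); [| apply Hlin, Ht].
    apply inI_locally_forall with lo hi; [exact Ht |]. intros s Hs. symmetry. apply Hk1, Hs. }
  intros t Ht. destruct (Derive_n_3_xy lo hi x y Hsx Hsy Hdet t Ht) as [E3x E3y].
  rewrite (euler_lagrange_eq lo hi x y Hsx Hsy Hdet t Ht), Hk2, E3x, E3y, (Hk t Ht) by exact Ht.
  ring.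
Qed.

Lemma critical_of_linear A B :
  (forall t, inI lo hi t -> ea_curv x y t = A * Derive x t + B * Derive y t) ->
  ea_critical lo hi x y.
Proof.
  intros HAB X Y a b HX HY H0 Ha Hb Hab Hsupp.
  pose proof (first_variation lo hi x y X Y a b Hsx Hsy Hdet HX HY H0 Ha Hb Hab Hsupp) as HG.
  rewrite (RInt_ext _ (fun _ => 0)), RInt_const in HG.
  - unfold scal in HG; simpl in HG; unfold mult in HG; simpl in HG.
    rewrite Rmult_0_r in HG. exact HG.
  - intros t Ht. rewrite Rmin_left, Rmax_right in Ht by lra. unfold var_integrand.
    rewrite (euler_lagrange_eq_0_of_linear A B HAB) by (apply (inI_between lo hi a b); auto; lra).
    rewrite Rmult_0_r, Rmult_0_l. reflexivity.
Qed.

Lemma RInt_euler_lagrange_times_bump_eq_0 (Hcrit : ea_critical lo hi x y) al be c d :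
  inI lo hi c -> inI lo hi d -> c < d ->
  RInt (fun t => euler_lagrange x y t * (be * Derive_n x 1 t - al * Derive_n y 1 t) * bump c d t)
    c d = 0.
Proof.
  intros Hc Hd Hcd.
  set (X := fun u t => x t + u * (al * bump c d t)).
  set (Y := fun u t => y t + u * (be * bump c d t)).
  assert (HX : smooth2_on lo hi X) by (apply smooth2_affine; [exact Hsx | apply smooth_on_scaled_bump]).
  assert (HY : smooth2_on lo hi Y) by (apply smooth2_affine; [exact Hsy | apply smooth_on_scaled_bump]).
  assert (H0 : forall t, inI lo hi t -> X 0 t = x t /\ Y 0 t = y t)
    by (intros; unfold X, Y; split; ring).
  assert (Hsupp : forall u t, inI lo hi t -> t < c \/ d < t -> X u t = x t /\ Y u t = y t).
  { intros u t _ Ht. unfold X, Y. rewrite bump_eq_0 by lra. split; ring. }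
  assert (E : RInt (var_integrand x y X Y) c d = 0).
  { rewrite <- (is_derive_unique _ _ _
      (first_variation lo hi x y X Y c d Hsx Hsy Hdet HX HY H0 Hc Hd (Rlt_le _ _ Hcd) Hsupp)).
    exact (is_derive_unique _ _ _ (Hcrit X Y c d HX HY H0 Hc Hd (Rlt_le _ _ Hcd) Hsupp)). }
  assert (Hex : ex_RInt (fun t => euler_lagrange x y t
                          * (be * Derive_n x 1 t - al * Derive_n y 1 t) * bump c d t) c d).
  { apply (@ex_RInt_continuous R_CompleteNormedModule). intros t Ht.
    rewrite Rmin_left, Rmax_right in Ht by lra.
    assert (Ht' : inI lo hi t) by (apply (inI_between lo hi c d); auto).
    pose proof (euler_lagrange_continuous lo hi x y t Hsx Hsy Hdet Ht').
    pose proof (is_derive_continuous _ _ _ (Dx 1%nat t Ht')).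
    pose proof (is_derive_continuous _ _ _ (Dy 1%nat t Ht')).
    pose proof (bump_continuous c d t). Rcontinuity. }
  destruct Hex as [I0 HI0].
  assert (HI1 : is_RInt (var_integrand x y X Y) c d (scal (2/3) I0)).
  { eapply is_RInt_ext; [| apply is_RInt_scal, HI0]. intros t _.
    unfold var_integrand, X, Y. rewrite !variation_n_affine.
    unfold scal; simpl; unfold mult; simpl. ring. }
  rewrite (is_RInt_unique _ _ _ _ HI1) in E. rewrite (is_RInt_unique _ _ _ _ HI0).
  unfold scal in E; simpl in E; unfold mult in E; simpl in E. lra.
Qed.

Lemma euler_lagrange_eq_0_of_critical (Hcrit : ea_critical lo hi x y) t :
  inI lo hi t -> euler_lagrange x y t = 0.
Proof.
  intros Ht.
  assert (Htest : forall al be, euler_lagrange x y t * (be * Derive_n x 1 t - al * Derive_n y 1 t) = 0).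
  { intros al be.
    apply (eq_0_of_RInt_times_bump lo hi
             (fun t => euler_lagrange x y t * (be * Derive_n x 1 t - al * Derive_n y 1 t)));
      [| intros c d Hc Hd Hcd; apply RInt_euler_lagrange_times_bump_eq_0; assumption | exact Ht].
    intros s Hs.
    pose proof (euler_lagrange_continuous lo hi x y s Hsx Hsy Hdet Hs).
    pose proof (is_derive_continuous _ _ _ (Dx 1%nat s Hs)).
    pose proof (is_derive_continuous _ _ _ (Dy 1%nat s Hs)). Rcontinuity. }
  pose proof (Htest 0 1) as Ex. pose proof (Htest (-1) 0) as Ey.
  pose proof (Hdet t Ht) as D. unfold ea_det, det2 in D.
  transitivity (euler_lagrange x y t * (Derive_n x 1 t * Derive_n y 2 t - Derive_n y 1 t * Derive_n x 2 t));
    [change (Derive_n x 1 t) with (Derive x t); change (Derive_n y 1 t) with (Derive y t);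
     rewrite D; ring |].
  transitivity ((euler_lagrange x y t * (1 * Derive_n x 1 t - 0 * Derive_n y 1 t)) * Derive_n y 2 t
              + (euler_lagrange x y t * (0 * Derive_n x 1 t - -1 * Derive_n y 1 t)) * - Derive_n x 2 t);
    [ring |].
  rewrite Ex, Ey. ring.
Qed.

(* Cramer's rule for [kappa = A x' + B y'], [kappa' = A x'' + B y''] (as [|c', c''| = 1]);
   the Euler-Lagrange equation [kappa'' + kappa^2 = 0] makes the solution constant. *)
Definition coeff_x t := kap x y t * Derive_n y 2 t - kap1 x y t * Derive_n y 1 t.
Definition coeff_y t := kap1 x y t * Derive_n x 1 t - kap x y t * Derive_n x 2 t.

Lemma coeffs_is_derive (Hcrit : ea_critical lo hi x y) t : inI lo hi t ->
  is_derive coeff_x t 0 /\ is_derive coeff_y t 0.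
Proof.
  intros Ht.
  pose proof (euler_lagrange_eq_0_of_critical Hcrit t Ht) as EL.
  rewrite (euler_lagrange_eq lo hi x y Hsx Hsy Hdet t Ht) in EL.
  destruct (Derive_n_3_xy lo hi x y Hsx Hsy Hdet t Ht) as [E3x E3y].
  pose proof (Dkap t Ht). pose proof (Dkap1 t Ht).
  pose proof (Dx 1%nat t Ht). pose proof (Dx 2%nat t Ht).
  pose proof (Dy 1%nat t Ht). pose proof (Dy 2%nat t Ht).
  unfold coeff_x, coeff_y. split; (auto_derive_from_hyps; simpl in *; nra).
Qed.

Lemma linear_of_critical : ea_critical lo hi x y ->
  exists A B : R, forall t, inI lo hi t -> ea_curv x y t = A * Derive x t + B * Derive y t.
Proof.
  intros Hcrit.
  destruct (classic (exists t0, inI lo hi t0)) as [[t0 Ht0] | Hn];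
    [| exists 0, 0; intros t Ht; exfalso; apply Hn; exists t; exact Ht].
  exists (coeff_x t0), (coeff_y t0). intros t Ht.
  rewrite <- (eq_of_is_derive_0_on_inI lo hi coeff_x (fun s Hs => proj1 (coeffs_is_derive Hcrit s Hs))
                t t0 Ht Ht0),
          <- (eq_of_is_derive_0_on_inI lo hi coeff_y (fun s Hs => proj2 (coeffs_is_derive Hcrit s Hs))
                t t0 Ht Ht0).
  rewrite (ea_curv_eq_kap lo hi x y Hsx Hsy Hdet t Ht).
  pose proof (Hdet t Ht) as D. unfold ea_det, det2 in D.
  unfold coeff_x, coeff_y.
  change (Derive_n x 1 t) with (Derive x t); change (Derive_n y 1 t) with (Derive y t).
  transitivity (kap x y t * (Derive x t * Derive_n y 2 t - Derive y t * Derive_n x 2 t));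
    [rewrite D; ring | ring].
Qed.

End Criticality.

Theorem theorem2 (lo hi : Rbar) (x y : R -> R) :
  Rbar_lt lo hi ->
  smooth_on lo hi x -> smooth_on lo hi y ->
  (forall t, inI lo hi t -> ea_det x y t = 1) ->
  (ea_critical lo hi x y <->
   exists A B : R, forall t, inI lo hi t ->
     ea_curv x y t = A * Derive x t + B * Derive y t).
Proof.
  intros _ Hsx Hsy Hdet. split.
  - apply linear_of_critical; assumption.
  - intros (A & B & HAB). apply (critical_of_linear lo hi x y Hsx Hsy Hdet A B HAB).
Qed.
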